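(* Every extreme point $x$ of $B_J$ is separated by partitions, and for any two consecutive elements $n_1<n_2$ of $\mathrm{supp}(x)$ we have $x(n_1)x(n_2)<0$.
   Context: For a real sequence $x=(x(n))_{n\in\mathbb N}$ let $\|x\|_J=\sup\bigl(\sum_{i=1}^n|\sum_{k\in I_i}x(k)|^2\bigr)^{1/2}$ over all $n$ and all families of pairwise disjoint intervals $I_1,\dots,I_n$ of $\mathbb N$ (intervals: nonempty sets of consecutive positive integers, possibly infinite). $J=\{x:\|x\|_J<\infty\}$ with closed unit ball $B_J$; for $x\in J$ and any interval $I$ the series $\sum_{k\in I}x(k)$ converges. $\mathrm{supp}(x)=\{n:x(n)\ne0\}$. A family of intervals $\mathcal I=\{I_i\}_{i\in F}$: $F=\{1,\dots,k\}$ or $F=\mathbb N$, each $I_i$ an interval, $\max I_i<\min I_{i+1}$ whenever $i+1\in F$; $\|x\|_{\mathcal I}=(\sum_{i\in F}|\sum_{k\in I_i}x(k)|^2)^{1/2}$; it is $x$-norming if $\|x\|_{\mathcal I}=\|x\|_J$. For nonempty $L\subset\mathbb N$, $\sup L=\max L$ if finite and $\infty$ otherwise. An $x$-norming partition is an $x$-norming family with $\{\min I_i,\max I_i\}\subset\mathrm{supp}(x)$ for all $i<\sup F$, and, if $F$ is finite, $\min I_i\in\mathrm{supp}(x)$ and $\sup I_i=\sup\mathrm{supp}(x)$ for $i=\sup F$. A vector $x\in J$ is separated by partitions if for any two consecutive elements $n_1<n_2$ of $\mathrm{supp}(x)$ there exists an $x$-norming partition in which $n_1$ and $n_2$ belong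 to different intervals. *)

From Stdlib Require Import Reals.
From Coquelicot Require Import Coquelicot.
Open Scope R_scope.

(* Sequences are indexed by nat; the paper's index k >= 1 corresponds to k-1. *)
Definition seqR := nat -> R.

(* An interval of nat: [lo, h] (hi = Some h, lo <= h) or [lo, oo) (hi = None). *)
Record interval := mkInterval { lo : nat; hi : option nat }.

Definition wf_interval (I : interval) : Prop :=
  match hi I with Some h => (lo I <= h)%nat | None => True end.

Definition in_interval (n : nat) (I : interval) : Prop :=
  (lo I <= n)%nat /\ match hi I with Some h => (n <= h)%nat | None => True end.

Definition interval_sum (x : seqR) (I : interval) (s : R) : Prop :=
  match hi I with
  | Some h => s = sum_n_m x (lo I) h
  | None => is_series (fun k => x (lo I + k)%nat) s
  end.

Fixpoint sum_lt (f : nat -> R) (n : nat) : R :=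
  match n with O => 0 | S m => sum_lt f m + f m end.

Definition Jvalues (x : seqR) (v : R) : Prop :=
  exists (n : nat) (I : nat -> interval) (s : nat -> R),
    (forall i, (i < n)%nat -> wf_interval (I i)) /\
    (forall i j, (i < n)%nat -> (j < n)%nat -> i <> j ->
        forall m, ~ (in_interval m (I i) /\ in_interval m (I j))) /\
    (forall i, (i < n)%nat -> interval_sum x (I i) (s i)) /\
    v = sqrt (sum_lt (fun i => (s i)^2) n).

(* ||x||_J as an extended real (+oo when x is not in J). *)
Definition Jnorm (x : seqR) : Rbar := Lub_Rbar (Jvalues x).

Definition inJ (x : seqR) : Prop := is_finite (Jnorm x).

Definition BJ (x : seqR) : Prop := Rbar_le (Jnorm x) (Finite 1).

Definition extreme_point_BJ (x : seqR) : Prop :=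
  BJ x /\
  forall (y z : seqR) (t : R), BJ y -> BJ z -> 0 < t < 1 ->
    (forall n, x n = t * y n + (1 - t) * z n) ->
    (forall n, y n = x n) /\ (forall n, z n = x n).

Definition in_supp (x : seqR) (n : nat) : Prop := x n <> 0.

(* A family of intervals indexed by F = {0,...,k-1} (size = Some k, k >= 1)
   or F = nat (size = None). *)
Record family := mkFamily { fsize : option nat; fint : nat -> interval }.

Definition in_F (F : family) (i : nat) : Prop :=
  match fsize F with Some k => (i < k)%nat | None => True end.

Definition wf_family (F : family) : Prop :=
  (match fsize F with Some k => (1 <= k)%nat | None => True end) /\
  (forall i, in_F F i -> wf_interval (fint F i)) /\
  (forall i, in_F F (S i) ->
     match hi (fint F i) with
     | Some h => (h < lo (fint F (S i)))%nat
     | None => False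
     end).

Definition norming (x : seqR) (F : family) : Prop :=
  wf_family F /\
  exists s : nat -> R,
    (forall i, in_F F i -> interval_sum x (fint F i) (s i)) /\
    match fsize F with
    | Some k => Finite (sqrt (sum_lt (fun i => (s i)^2) k)) = Jnorm x
    | None => exists L, is_series (fun i => (s i)^2) L /\ Finite (sqrt L) = Jnorm x
    end.

(* sup I = sup supp(x) *)
Definition sup_matches_supp (x : seqR) (I : interval) : Prop :=
  match hi I with
  | Some h => in_supp x h /\ (forall n, (h < n)%nat -> x n = 0)
  | None => forall N, exists n, (N < n)%nat /\ in_supp x n
  end.

Definition norming_partition (x : seqR) (F : family) : Prop :=
  norming x F /\
  match fsize F with
  | Some k =>
      (forall i, (S i < k)%nat ->
         in_supp x (lo (fint F i)) /\
         exists h, hi (fint F i) = Some h /\ in_supp x h) /\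
      in_supp x (lo (fint F (Nat.pred k))) /\
      sup_matches_supp x (fint F (Nat.pred k))
  | None =>
      forall i, in_supp x (lo (fint F i)) /\
         exists h, hi (fint F i) = Some h /\ in_supp x h
  end.

Definition consecutive_in_supp (x : seqR) (n1 n2 : nat) : Prop :=
  (n1 < n2)%nat /\ in_supp x n1 /\ in_supp x n2 /\
  forall m, (n1 < m < n2)%nat -> x m = 0.

Definition separated_by_partitions (x : seqR) : Prop :=
  inJ x /\
  forall n1 n2, consecutive_in_supp x n1 n2 ->
    exists F, norming_partition x F /\
      exists i j, in_F F i /\ in_F F j /\ i <> j /\
        in_interval n1 (fint F i) /\ in_interval n2 (fint F j).

From Stdlib Require Import Reals.
From Coquelicot Require Import Coquelicot.
From Stdlib Require Import Lra Lia ClassicalEpsilon Classical Bool.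
Open Scope R_scope.

(** With [S] the partial sums of [x] and [L] their limit, [||x||_J^2] is the
    supremum, over sets of cut points, of the sums of the squared increments of
    [S] between consecutive cuts.  If no cut set separating [n1 < n2] came close
    to this supremum, both [x + eps (e_n1 - e_n2)] and [x - eps (e_n1 - e_n2)]
    would stay in [B_J], so [x] would not be extreme.  A diagonal (König)
    argument turns nearly norming separating cut sets into one separating cut
    set attaining the norm, and its cuts can be moved onto the support without
    loss.  For such a norming cut set neither merging two adjacent cells nor
    splitting a cell may increase the value; around [n1 < n2] this forces
    [x(n1) x(n2) < 0], and enumerating its cells yields the norming partition
    separating [n1] and [n2]. *)

Lemma sum_lt_S (f : nat -> R) n : sum_lt f (S n) = sum_lt f n + f n.
Proof. reflexivity. Qed.

Lemma sum_lt_ext (f g : nat -> R) n :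
  (forall i, (i < n)%nat -> f i = g i) -> sum_lt f n = sum_lt g n.
Proof.
  induction n as [|n IH]; intros H; simpl; auto.
  rewrite IH by (intros; apply H; lia). rewrite H by lia. reflexivity.
Qed.

Lemma sum_lt_plus (f g : nat -> R) n :
  sum_lt (fun i => f i + g i) n = sum_lt f n + sum_lt g n.
Proof. induction n; simpl; [lra|rewrite IHn; lra]. Qed.

Lemma sum_lt_scal (c : R) (f : nat -> R) n :
  sum_lt (fun i => c * f i) n = c * sum_lt f n.
Proof. induction n; simpl; [lra|rewrite IHn; lra]. Qed.

Lemma sum_lt_le (f g : nat -> R) n :
  (forall i, (i < n)%nat -> f i <= g i) -> sum_lt f n <= sum_lt g n.
Proof.
  induction n as [|n IH]; intros H; simpl; [lra|].
  assert (sum_lt f n <= sum_lt g n) by (apply IH; intros; apply H; lia).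
  assert (f n <= g n) by (apply H; lia). lra.
Qed.

Lemma sum_lt_nonneg (f : nat -> R) n :
  (forall i, 0 <= f i) -> 0 <= sum_lt f n.
Proof. intros H; induction n; simpl; [lra|]. specialize (H n); lra. Qed.

Lemma sum_lt_mono (f : nat -> R) n m :
  (forall i, 0 <= f i) -> (n <= m)%nat -> sum_lt f n <= sum_lt f m.
Proof.
  intros H Hnm; induction Hnm; [apply Rle_refl|]. simpl. specialize (H m); lra.
Qed.

Lemma sum_lt_tail (f g : nat -> R) K M :
  (K <= M)%nat -> (forall m, (K <= m)%nat -> f m = g m) ->
  sum_lt f M - sum_lt f K = sum_lt g M - sum_lt g K.
Proof.
  intros HKM H. induction HKM; [lra|]. rewrite !sum_lt_S, H by lia. lra.
Qed.

Lemma sum_lt_update (f : nat -> R) k a M : (k < M)%nat ->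
  sum_lt (fun m => if Nat.eqb m k then a else f m) M = sum_lt f M - f k + a.
Proof.
  induction M as [|M IH]; intros Hk; [lia|]. rewrite !sum_lt_S.
  destruct (Nat.eqb_spec M k) as [->|Hne].
  - rewrite (sum_lt_ext _ f) by (intros i Hi; destruct (Nat.eqb_spec i k); [lia|auto]).
    lra.
  - rewrite IH by lia. lra.
Qed.

Lemma sum_lt_update2 (f f' : nat -> R) a b M :
  a <> b -> (a < M)%nat -> (b < M)%nat ->
  (forall m, m <> a -> m <> b -> f' m = f m) ->
  sum_lt f' M = sum_lt f M + (f' a - f a) + (f' b - f b).
Proof.
  intros Hab Ha Hb H.
  rewrite (sum_lt_ext f' (fun m => if Nat.eqb m b then f' b else
                               if Nat.eqb m a then f' a else f m)).
  - rewrite sum_lt_update, sum_lt_update by auto.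
    destruct (Nat.eqb_spec b a); [lia|]. lra.
  - intros m _. destruct (Nat.eqb_spec m b), (Nat.eqb_spec m a); subst; auto.
Qed.

Lemma sum_lt_reindex_le (f : nat -> R) (P : nat -> bool) (phi : nat -> nat) n M :
  (forall m, 0 <= f m) ->
  (forall i j, (i < n)%nat -> (j < n)%nat -> P i = true -> P j = true ->
     phi i = phi j -> i = j) ->
  (forall i, (i < n)%nat -> P i = true -> (phi i < M)%nat) ->
  sum_lt (fun i => if P i then f (phi i) else 0) n <= sum_lt f M.
Proof.
  revert f. induction n as [|n IH]; intros f Hf Hinj Hb; rewrite ?sum_lt_S.
  { apply sum_lt_nonneg; auto. }
  destruct (P n) eqn:EP.
  - set (f' := fun m => if Nat.eqb m (phi n) then 0 else f m).
    assert (Hf' : sum_lt f' M = sum_lt f M - f (phi n))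
      by (unfold f'; rewrite sum_lt_update by auto; lra).
    rewrite (sum_lt_ext _ (fun i => if P i then f' (phi i) else 0)).
    + assert (sum_lt (fun i => if P i then f' (phi i) else 0) n <= sum_lt f' M).
      { apply IH.
        - intros m; unfold f'; destruct (Nat.eqb m (phi n)); auto; lra.
        - intros; apply Hinj; auto; lia.
        - intros; apply Hb; auto; lia. }
      lra.
    + intros i Hi. destruct (P i) eqn:Ei; auto. unfold f'.
      destruct (Nat.eqb_spec (phi i) (phi n)); auto.
      assert (i = n) by (apply Hinj; auto; lia). lia.
  - rewrite Rplus_0_r. apply IH; auto.
Qed.

Lemma sum_lt_at_most_one (P : nat -> bool) (a : R) n :
  0 <= a ->
  (forall i j, (i < n)%nat -> (j < n)%nat -> P i = true -> P j = true -> i = j) ->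
  sum_lt (fun i => if P i then a else 0) n <= a.
Proof.
  intros Ha H.
  pose proof (sum_lt_reindex_le (fun m => if Nat.eqb m 0 then a else 0) P
                (fun _ => 0%nat) n 1) as HR.
  simpl in HR. rewrite Rplus_0_l in HR. apply HR; auto.
  intros m; destruct (Nat.eqb m 0); lra.
Qed.

Lemma sum_lt_filter (f : nat -> R) (P : nat -> bool) n :
  exists k (g : nat -> nat),
    (forall j, (j < k)%nat -> (g j < n)%nat /\ P (g j) = true) /\
    (forall j j', (j < j' < k)%nat -> (g j < g j')%nat) /\
    sum_lt (fun j => f (g j)) k = sum_lt (fun i => if P i then f i else 0) n.
Proof.
  induction n as [|n [k [g [G1 [G2 G3]]]]].
  - exists 0%nat, (fun j => j). repeat split; intros; lia.
  - destruct (P n) eqn:EP.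
    + exists (S k), (fun j => if Nat.eqb j k then n else g j). split; [|split].
      * intros j Hj. destruct (Nat.eqb_spec j k); [split; [lia|auto]|].
        specialize (G1 j ltac:(lia)). split; [lia|tauto].
      * intros j j' Hj. destruct (Nat.eqb_spec j k); [lia|].
        specialize (G1 j ltac:(lia)).
        destruct (Nat.eqb_spec j' k); [lia|]. apply G2; lia.
      * rewrite !sum_lt_S, EP, Nat.eqb_refl, <- G3. f_equal.
        apply sum_lt_ext. intros j Hj. destruct (Nat.eqb_spec j k); [lia|auto].
    + exists k, g. split; [|split]; auto.
      * intros j Hj. specialize (G1 j Hj). split; [lia|tauto].
      * rewrite sum_lt_S, EP, G3. lra.
Qed.

Lemma nat_fun_bounded (phi : nat -> nat) n :
  exists B, forall i, (i < n)%nat -> (phi i < B)%nat.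
Proof.
  induction n as [|n [B HB]]; [exists 0%nat; intros; lia|].
  exists (Nat.max B (S (phi n))). intros i Hi.
  destruct (Nat.eq_dec i n); [subst; lia|]. specialize (HB i ltac:(lia)). lia.
Qed.

Definition holds (P : Prop) : bool :=
  if excluded_middle_informative P then true else false.

Lemma holds_spec (P : Prop) : holds P = true <-> P.
Proof. unfold holds. destruct excluded_middle_informative; split; auto; discriminate. Qed.

Lemma least_above (P : nat -> Prop) a : (exists m, (a <= m)%nat /\ P m) ->
  exists m, (a <= m)%nat /\ P m /\ forall j, (a <= j < m)%nat -> ~ P j.
Proof.
  intros [m0 Hm0].
  induction m0 as [m0 IH] using (well_founded_induction Wf_nat.lt_wf).
  destruct (classic (exists j, (a <= j < m0)%nat /\ P j)) as [[j Hj]|Hn].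
  - apply (IH j); [lia|]. split; [lia|tauto].
  - exists m0. split; [tauto|split; [tauto|]]. intros j Hj Pj. apply Hn; exists j; auto.
Qed.

Lemma greatest_below (P : nat -> Prop) q : (exists m, (m < q)%nat /\ P m) ->
  exists m, (m < q)%nat /\ P m /\ forall j, (m < j < q)%nat -> ~ P j.
Proof.
  induction q as [|q IH]; intros [m [Hm Pm]]; [lia|].
  destruct (classic (P q)) as [Pq|Pq].
  - exists q. split; [lia|split; auto]. intros; lia.
  - destruct (Nat.eq_dec m q); [subst; tauto|].
    destruct IH as [m' [H1 [H2 H3]]]; [exists m; split; auto; lia|].
    exists m'. split; [lia|split; auto]. intros j Hj. destruct (Nat.eq_dec j q); [subst; auto|].
    apply H3; lia.
Qed.

Definition psum (x : seqR) (k : nat) : R := sum_lt x k.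

Lemma sum_n_m_psum (x : seqR) a h :
  (a <= h)%nat -> sum_n_m x a h = psum x (S h) - psum x a.
Proof.
  intros H. induction H.
  - rewrite sum_n_n. unfold psum; simpl. lra.
  - rewrite sum_n_Sm by lia. rewrite IHle. unfold psum; simpl.
    change plus with Rplus. lra.
Qed.

Lemma sum_n_psum (x : seqR) n : sum_n x n = psum x (S n).
Proof. unfold sum_n. rewrite sum_n_m_psum by lia. unfold psum. simpl. lra. Qed.

Lemma sum_n_shift_psum (x : seqR) a m :
  sum_n (fun k => x (a + k)%nat) m = psum x (a + S m) - psum x a.
Proof.
  induction m.
  - rewrite sum_n_psum. unfold psum. replace (a + 1)%nat with (S a) by lia.
    simpl. rewrite Nat.add_0_r. lra.
  - unfold sum_n in *. rewrite sum_n_Sm by lia. rewrite IHm.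
    change plus with Rplus. unfold psum. replace (a + S (S m))%nat with (S (a + S m)) by lia.
    simpl. lra.
Qed.

Lemma psum_const (x : seqR) a b :
  (a <= b)%nat -> (forall j, (a <= j < b)%nat -> x j = 0) -> psum x b = psum x a.
Proof.
  intros Hab H; induction Hab; auto. unfold psum in *; simpl.
  rewrite IHHab by (intros; apply H; lia). rewrite H by lia. lra.
Qed.

Lemma lim_psum_eventually_const (x : seqR) (L : R) a :
  is_lim_seq (psum x) L -> (forall j, (a <= j)%nat -> x j = 0) -> L = psum x a.
Proof.
  intros HL H.
  assert (H2 : is_lim_seq (psum x) (psum x a)).
  { eapply is_lim_seq_ext_loc; [|apply is_lim_seq_const]. exists a.
    intros n Hn. symmetry. apply psum_const; auto. intros; apply H; lia. }
  apply is_lim_seq_unique in HL. apply is_lim_seq_unique in H2. rewrite HL in H2.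
  injection H2; auto.
Qed.

(* [L] stands for the sum of the whole series. *)
Definition interval_end (x : seqR) (L : R) (I : interval) : R :=
  match hi I with Some h => psum x (S h) | None => L end.

Lemma interval_sum_iff (x : seqR) (L : R) I s :
  is_lim_seq (psum x) L -> wf_interval I ->
  (interval_sum x I s <-> s = interval_end x L I - psum x (lo I)).
Proof.
  intros HL Hwf. unfold interval_sum, interval_end, wf_interval in *.
  destruct (hi I) as [h|].
  - rewrite sum_n_m_psum by auto. tauto.
  - assert (Htail : is_lim_seq (sum_n (fun k => x (lo I + k)%nat)) (L - psum x (lo I))).
    { eapply is_lim_seq_ext.
      { intros m. symmetry. apply sum_n_shift_psum. }
      apply is_lim_seq_minus'; [|apply is_lim_seq_const].
      apply (is_lim_seq_incr_n _ (S (lo I))) in HL.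
      eapply is_lim_seq_ext; [|apply HL]. intros n.
      now replace (lo I + S n)%nat with (n + S (lo I))%nat by lia. }
    split.
    + intros Hs. change (is_lim_seq (sum_n (fun k => x (lo I + k)%nat)) s) in Hs.
      apply is_lim_seq_unique in Htail. apply is_lim_seq_unique in Hs.
      rewrite Hs in Htail. injection Htail; auto.
    + intros ->. exact Htail.
Qed.

Definition next_cut (c : nat -> bool) (n : nat) : option nat :=
  match excluded_middle_informative (exists m, (S n <= m)%nat /\ c m = true) with
  | left H => Some (proj1_sig (constructive_indefinite_description _
                 (least_above (fun m => c m = true) (S n) H)))
  | right _ => None
  end.

Lemma next_cut_Some c n m : next_cut c n = Some m ->
  (n < m)%nat /\ c m = true /\ forall k, (n < k < m)%nat -> c k = false.
Proof.
  unfold next_cut. destruct excluded_middle_informative; [|discriminate].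
  intros E; injection E; intros <-.
  destruct constructive_indefinite_description as [k [H1 [H2 H3]]]; simpl.
  split; [lia|split; auto]. intros j Hj. apply not_true_is_false, H3. lia.
Qed.

Lemma next_cut_None c n : next_cut c n = None -> forall k, (n < k)%nat -> c k = false.
Proof.
  unfold next_cut. destruct excluded_middle_informative as [|Hn]; [discriminate|].
  intros _ k Hk. apply not_true_is_false. intros E. apply Hn. exists k; auto.
Qed.

Lemma next_cut_Some_intro c n m : (n < m)%nat -> c m = true ->
  (forall k, (n < k < m)%nat -> c k = false) -> next_cut c n = Some m.
Proof.
  intros H1 H2 H3. destruct (next_cut c n) as [m'|] eqn:E.
  - apply next_cut_Some in E. destruct E as [E1 [E2 E3]]. f_equal.
    destruct (Nat.lt_total m m') as [Hl|[Hl|Hl]]; auto.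
    + rewrite E3 in H2 by lia. discriminate.
    + rewrite H3 in E2 by lia. discriminate.
  - apply next_cut_None with (k := m) in E; auto. congruence.
Qed.

Lemma next_cut_None_intro c n :
  (forall k, (n < k)%nat -> c k = false) -> next_cut c n = None.
Proof.
  intros H. destruct (next_cut c n) as [m|] eqn:E; auto.
  apply next_cut_Some in E. destruct E as [E1 [E2 _]]. rewrite H in E2 by lia. discriminate.
Qed.

Lemma next_cut_ext c c' n :
  (forall k, (n < k)%nat -> c k = c' k) -> next_cut c n = next_cut c' n.
Proof.
  intros H. destruct (next_cut c n) as [m|] eqn:E.
  - apply next_cut_Some in E. destruct E as [E1 [E2 E3]]. symmetry.
    apply next_cut_Some_intro; auto; [rewrite <- H by lia; auto|].
    intros k Hk. rewrite <- H by lia. apply E3; lia.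
  - symmetry. apply next_cut_None_intro. intros k Hk. rewrite <- H by lia.
    apply (next_cut_None c n E); auto.
Qed.

Lemma next_cut_ext_Some c c' n m : next_cut c n = Some m ->
  (forall k, (n < k <= m)%nat -> c k = c' k) -> next_cut c' n = Some m.
Proof.
  intros E H. apply next_cut_Some in E. destruct E as [E1 [E2 E3]].
  apply next_cut_Some_intro; auto; [rewrite <- H by lia; auto|].
  intros k Hk. rewrite <- H by lia. apply E3; lia.
Qed.

(* A cut set [c] splits [nat] into cells [a, b): each starts at [0] or at a cut
   [a] and ends just before the next cut [b], if any.  [cut_value x L c M] is
   the sum of the squared sums of [x] over the cells starting below [M]. *)
Definition is_start (c : nat -> bool) (n : nat) : bool := Nat.eqb n 0 || c n.

Definition cell_end (x : seqR) (L : R) (c : nat -> bool) (n : nat) : R :=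
  match next_cut c n with Some m => psum x m | None => L end.

Definition cell_sq (x : seqR) (L : R) (c : nat -> bool) (n : nat) : R :=
  if is_start c n then (cell_end x L c n - psum x n)^2 else 0.

Definition cut_value (x : seqR) (L : R) (c : nat -> bool) (M : nat) : R :=
  sum_lt (cell_sq x L c) M.

Definition cell (c : nat -> bool) (n : nat) : interval :=
  mkInterval n (match next_cut c n with Some m => Some (pred m) | None => None end).

Lemma is_start_cut c n : c n = true -> is_start c n = true.
Proof. intros H. unfold is_start. rewrite H, orb_true_r. reflexivity. Qed.

Lemma is_start_pos c n : (0 < n)%nat -> is_start c n = c n.
Proof. intros H. unfold is_start. destruct (Nat.eqb_spec n 0); [lia|reflexivity]. Qed.

Lemma next_cut_before_start c a b : (a < b)%nat -> is_start c b = true ->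
  exists k, next_cut c a = Some k /\ (k <= b)%nat.
Proof.
  intros Hab Hb. rewrite is_start_pos in Hb by lia.
  destruct (least_above (fun m => c m = true) (S a) (ex_intro _ b (conj Hab Hb)))
    as [k [Hk1 [Hk2 Hk3]]].
  exists k. split.
  - apply next_cut_Some_intro; auto. intros j Hj. apply not_true_is_false, Hk3. lia.
  - destruct (Nat.le_gt_cases k b); auto. exfalso. apply (Hk3 b); [lia|auto].
Qed.

Lemma cell_sq_nonneg x L c n : 0 <= cell_sq x L c n.
Proof. unfold cell_sq. destruct is_start; [apply pow2_ge_0|lra]. Qed.

Lemma cut_value_mono x L c M M' : (M <= M')%nat -> cut_value x L c M <= cut_value x L c M'.
Proof. intros; apply sum_lt_mono; auto using cell_sq_nonneg. Qed.

Lemma cell_sq_ext x L c c' m : is_start c m = is_start c' m ->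
  (is_start c m = true -> next_cut c m = next_cut c' m) ->
  cell_sq x L c m = cell_sq x L c' m.
Proof.
  intros H1 H2. unfold cell_sq, cell_end. rewrite <- H1.
  destruct (is_start c m); auto. rewrite H2; auto.
Qed.

Lemma cell_wf c n : wf_interval (cell c n).
Proof.
  unfold wf_interval, cell; simpl. destruct (next_cut c n) eqn:E; auto.
  apply next_cut_Some in E; lia.
Qed.

Lemma cell_interval_sum x (L : R) c n : is_lim_seq (psum x) L ->
  interval_sum x (cell c n) (cell_end x L c n - psum x n).
Proof.
  intros HL. apply (interval_sum_iff x L _ _ HL (cell_wf c n)).
  unfold interval_end, cell, cell_end; cbn [hi lo].
  destruct (next_cut c n) as [m|] eqn:E; auto.
  apply next_cut_Some in E. now replace (S (pred m)) with m by lia.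
Qed.

Definition family_cuts (n : nat) (I : nat -> interval) (m : nat) : bool :=
  holds (exists i, (i < n)%nat /\ (lo (I i) = m \/ hi (I i) = Some (pred m) /\ (0 < m)%nat)).

Definition disjoint_family (n : nat) (I : nat -> interval) : Prop :=
  forall i j, (i < n)%nat -> (j < n)%nat -> i <> j ->
    forall m, ~ (in_interval m (I i) /\ in_interval m (I j)).

Lemma Jvalues_zero (x : seqR) : Jvalues x 0.
Proof.
  exists 0%nat, (fun _ => mkInterval 0 None), (fun _ => 0).
  repeat split; try (intros; lia). simpl. now rewrite sqrt_0.
Qed.

Lemma in_interval_lo I : wf_interval I -> in_interval (lo I) I.
Proof. unfold wf_interval, in_interval. destruct (hi I); auto. Qed.

Lemma ordered_family_disjoint n (I : nat -> interval) :
  (forall i, (S i < n)%nat ->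
     match hi (I i) with Some h => (h < lo (I (S i)))%nat | None => False end) ->
  (forall i, (i < n)%nat -> wf_interval (I i)) -> disjoint_family n I.
Proof.
  intros Hord Hwf.
  assert (Hbelow : forall i j m, (i < j < n)%nat -> in_interval m (I i) -> (m < lo (I j))%nat).
  { intros i j m Hij Hm. induction j as [|j IH]; [lia|].
    destruct (Nat.eq_dec i j) as [->|Hne].
    - specialize (Hord j ltac:(lia)). destruct Hm as [_ Hm].
      destruct (hi (I j)); [lia|contradiction].
    - specialize (IH ltac:(lia)). specialize (Hord j ltac:(lia)). specialize (Hwf j ltac:(lia)).
      unfold wf_interval in Hwf. destruct (hi (I j)); [lia|contradiction]. }
  intros i j Hi Hj Hne m [Hmi Hmj].
  destruct (Nat.lt_total i j) as [Hl|[Hl|Hl]]; [|lia|].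
  - specialize (Hbelow i j m ltac:(lia) Hmi). destruct Hmj. lia.
  - specialize (Hbelow j i m ltac:(lia) Hmj). destruct Hmi. lia.
Qed.

Lemma family_cuts_next_cut n I i :
  (forall i, (i < n)%nat -> wf_interval (I i)) -> disjoint_family n I -> (i < n)%nat ->
  next_cut (family_cuts n I) (lo (I i)) =
  match hi (I i) with Some h => Some (S h) | None => None end.
Proof.
  intros Hwf Hdis Hi.
  assert (Hno : forall k, (lo (I i) < k)%nat ->
     match hi (I i) with Some h => (k <= h)%nat | None => True end ->
     family_cuts n I k = false).
  { intros k Hk1 Hk2. apply not_true_is_false. unfold family_cuts. rewrite holds_spec.
    intros [j [Hj [E|[E E']]]].
    - assert (i <> j) by (intro; subst; lia).
      apply (Hdis i j Hi Hj H k). split; [split; [lia|auto]|].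
      rewrite <- E. apply in_interval_lo; auto.
    - assert (i <> j) by (intro; subst; rewrite E in Hk2; lia).
      apply (Hdis i j Hi Hj H (pred k)). split.
      + split; [lia|]. destruct (hi (I i)); auto. lia.
      + specialize (Hwf j Hj). unfold wf_interval in Hwf. rewrite E in Hwf.
        split; [auto|]. rewrite E. auto. }
  specialize (Hwf i Hi). unfold wf_interval in Hwf.
  destruct (hi (I i)) as [h|] eqn:Eh.
  - apply next_cut_Some_intro; [lia| |intros k Hk; apply Hno; lia].
    unfold family_cuts. apply holds_spec. exists i. split; auto. right. rewrite Eh.
    split; [auto|lia].
  - apply next_cut_None_intro. intros k Hk. apply Hno; auto.
Qed.

Section NormBound.
Variables (x : seqR) (J L : R).
Hypothesis HJ : Jnorm x = Finite J.
Hypothesis HL : is_lim_seq (psum x) L.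

Lemma Jvalues_le v : Jvalues x v -> v <= J.
Proof.
  intros H. pose proof (Lub_Rbar_correct (Jvalues x)) as [Hub _].
  specialize (Hub v H). unfold Jnorm in HJ. rewrite HJ in Hub. exact Hub.
Qed.

Lemma Jnorm_nonneg : 0 <= J.
Proof. apply Jvalues_le, Jvalues_zero. Qed.

Lemma sum_sq_filter_le n (I : nat -> interval) (s : nat -> R) (P : nat -> bool) :
  (forall i, (i < n)%nat -> P i = true -> wf_interval (I i) /\ interval_sum x (I i) (s i)) ->
  (forall i j, (i < n)%nat -> (j < n)%nat -> P i = true -> P j = true -> i <> j ->
     forall m, ~ (in_interval m (I i) /\ in_interval m (I j))) ->
  sum_lt (fun i => if P i then (s i)^2 else 0) n <= J^2.
Proof.
  intros H1 H2.
  destruct (sum_lt_filter (fun i => (s i)^2) P n) as [k [g [G1 [G2 <-]]]].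
  set (v := sum_lt (fun j => (s (g j))^2) k).
  assert (Hv0 : 0 <= v) by (apply sum_lt_nonneg; intros; apply pow2_ge_0).
  assert (Hv : sqrt v <= J).
  { apply Jvalues_le. exists k, (fun j => I (g j)), (fun j => s (g j)).
    split; [|split; [|split]]; auto.
    - intros j Hj. apply H1; apply G1; auto.
    - intros j j' Hj Hj' Hne. apply H2; try apply G1; auto.
      destruct (Nat.lt_total j j') as [Hl|[Hl|Hl]]; [|lia|].
      + specialize (G2 j j' ltac:(lia)); lia.
      + specialize (G2 j' j ltac:(lia)); lia.
    - intros j Hj. apply H1; apply G1; auto. }
  pose proof (sqrt_pos v). rewrite <- (sqrt_sqrt v Hv0). simpl. nra.
Qed.

Lemma sum_sq_family_le n I s :
  (forall i, (i < n)%nat -> wf_interval (I i)) -> disjoint_family n I ->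
  (forall i, (i < n)%nat -> interval_sum x (I i) (s i)) ->
  sum_lt (fun i => (s i)^2) n <= J^2.
Proof.
  intros H1 H2 H3. apply (sum_sq_filter_le n I s (fun _ => true)); auto.
Qed.

Lemma interval_sum_abs_le I s : wf_interval I -> interval_sum x I s -> Rabs s <= J.
Proof.
  intros H1 H2.
  assert (0 + s^2 <= J^2) by (apply (sum_sq_family_le 1 (fun _ => I) (fun _ => s));
                               [auto|red; intros; lia|auto]).
  pose proof Jnorm_nonneg. apply Rabs_le. split; nra.
Qed.

Lemma cut_value_le c M : cut_value x L c M <= J^2.
Proof.
  apply (sum_sq_filter_le M (cell c) (fun n => cell_end x L c n - psum x n) (is_start c)).
  - intros i _ _. split; [apply cell_wf|apply cell_interval_sum; auto].
  - intros i j _ _ Hi Hj Hne m [[A1 A2] [B1 B2]]. unfold cell in *; simpl in *.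
    destruct (Nat.lt_total i j) as [Hl|[Hl|Hl]]; [|lia|].
    + destruct (next_cut_before_start c i j Hl Hj) as [k [Ek Hk]]. rewrite Ek in A2. lia.
    + destruct (next_cut_before_start c j i Hl Hi) as [k [Ek Hk]]. rewrite Ek in B2. lia.
Qed.

Lemma cell_incr_abs_le c n : is_start c n = true ->
  Rabs (cell_end x L c n - psum x n) <= J.
Proof.
  intros Hs. apply (interval_sum_abs_le (cell c n)); [apply cell_wf|].
  apply cell_interval_sum; auto.
Qed.

Lemma family_le_cut_value n I s :
  (forall i, (i < n)%nat -> wf_interval (I i)) -> disjoint_family n I ->
  (forall i, (i < n)%nat -> interval_sum x (I i) (s i)) ->
  exists M, sum_lt (fun i => (s i)^2) n <= cut_value x L (family_cuts n I) M.
Proof.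
  intros H1 H2 H3.
  set (c := family_cuts n I).
  assert (Hsq : forall i, (i < n)%nat -> cell_sq x L c (lo (I i)) = (s i)^2).
  { intros i Hi. unfold cell_sq.
    replace (is_start c (lo (I i))) with true.
    2:{ symmetry. apply is_start_cut. unfold c, family_cuts. apply holds_spec.
        exists i; auto. }
    unfold cell_end, c. rewrite family_cuts_next_cut by auto.
    apply (interval_sum_iff x L _ _ HL (H1 i Hi)) in H3; auto. rewrite H3.
    unfold interval_end. destruct (hi (I i)); auto. }
  destruct (nat_fun_bounded (fun i => lo (I i)) n) as [B HB].
  exists B.
  rewrite (sum_lt_ext _ (fun i => cell_sq x L c (lo (I i)))) by (intros; rewrite Hsq; auto).
  apply (sum_lt_reindex_le (cell_sq x L c) (fun _ => true) (fun i => lo (I i)));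
    auto using cell_sq_nonneg.
  intros i j Hi Hj _ _ E. destruct (Nat.eq_dec i j); auto. exfalso.
  apply (H2 i j Hi Hj n0 (lo (I i))).
  split; [apply in_interval_lo; auto|]. rewrite E; apply in_interval_lo; auto.
Qed.

End NormBound.

Lemma psum_oscillation_families (x : seqR) (eps : R) : 0 <= eps ->
  (forall N, exists n m, (N <= n < m)%nat /\ eps <= Rabs (psum x m - psum x n)) ->
  forall K, exists (I : nat -> interval) (s : nat -> R) (B : nat),
    (forall i, (i < K)%nat -> exists h, hi (I i) = Some h /\ (lo (I i) <= h < B)%nat) /\
    (forall i, (S i < K)%nat ->
       match hi (I i) with Some h => (h < lo (I (S i)))%nat | None => False end) /\
    (forall i, (i < K)%nat -> interval_sum x (I i) (s i)) /\
    INR K * eps^2 <= sum_lt (fun i => (s i)^2) K.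
Proof.
  intros Heps Hosc K. induction K as [|K [I [s [B [F1 [F2 [F3 F4]]]]]]].
  { exists (fun _ => mkInterval 0 None), (fun _ => 0), 0%nat.
    repeat split; try (intros; lia). simpl. lra. }
  destruct (Hosc B) as [n [m [Hnm He]]].
  exists (fun i => if Nat.eqb i K then mkInterval n (Some (pred m)) else I i),
         (fun i => if Nat.eqb i K then psum x m - psum x n else s i), m.
  split; [|split; [|split]].
  - intros i Hi. destruct (Nat.eqb_spec i K).
    + exists (pred m). simpl. split; auto; lia.
    + destruct (F1 i ltac:(lia)) as [h [Eh Hh]]. exists h; split; auto; lia.
  - intros i Hi. destruct (Nat.eqb_spec i K); [lia|].
    destruct (Nat.eqb_spec (S i) K).
    + destruct (F1 i ltac:(lia)) as [h [Eh Hh]]. rewrite Eh. simpl. lia.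
    + apply F2; lia.
  - intros i Hi. destruct (Nat.eqb_spec i K).
    + unfold interval_sum; simpl. rewrite sum_n_m_psum by lia.
      now replace (S (pred m)) with m by lia.
    + apply F3; lia.
  - rewrite sum_lt_S, Nat.eqb_refl, S_INR.
    rewrite (sum_lt_ext _ (fun i => (s i)^2))
      by (intros i Hi; destruct (Nat.eqb_spec i K); [lia|auto]).
    assert (eps^2 <= (psum x m - psum x n)^2).
    { rewrite <- (pow2_abs (psum x m - psum x n)). apply pow_incr. lra. }
    lra.
Qed.

Lemma Jnorm_finite_psum_cvg (x : seqR) (J : R) :
  Jnorm x = Finite J -> exists L : R, is_lim_seq (psum x) L.
Proof.
  intros HJ.
  destruct (classic (Cauchy_crit (psum x))) as [HC|HnC].
  { destruct (Rcomplete.R_complete _ HC) as [l Hl]. exists l. apply is_lim_seq_Reals; auto. }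
  exfalso. unfold Cauchy_crit in HnC.
  apply not_all_ex_not in HnC. destruct HnC as [eps Heps].
  apply imply_to_and in Heps. destruct Heps as [Heps HN].
  assert (Hosc : forall N, exists n m, (N <= n < m)%nat /\ eps <= Rabs (psum x m - psum x n)).
  { intros N. apply NNPP. intros H. apply HN. exists N. intros n m Hn Hm.
    unfold Rdist. apply Rnot_le_lt. intros Hle. apply H.
    destruct (Nat.lt_total n m) as [Hl|[<-|Hl]].
    - exists n, m. split; [lia|]. now rewrite Rabs_minus_sym.
    - unfold Rminus in Hle. rewrite Rplus_opp_r, Rabs_R0 in Hle. lra.
    - exists m, n. split; [lia|auto]. }
  assert (Hle : forall K, INR K * eps^2 <= J^2).
  { intros K.
    destruct (psum_oscillation_families x eps ltac:(lra) Hosc K)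
      as [I [s [B [F1 [F2 [F3 F4]]]]]].
    assert (Hwf : forall i, (i < K)%nat -> wf_interval (I i)).
    { intros i Hi. destruct (F1 i Hi) as [h [Eh Hh]]. unfold wf_interval. rewrite Eh. lia. }
    eapply Rle_trans; [apply F4|]. apply (sum_sq_family_le x J HJ K I s); auto.
    apply ordered_family_disjoint; auto. }
  assert (He2 : 0 < eps^2) by nra.
  assert (Hq : 0 <= J^2 / eps^2) by (apply Rdiv_le_0_compat; [apply pow2_ge_0|auto]).
  destruct (nfloor_ex _ Hq) as [K [_ HK]].
  specialize (Hle (S K)). rewrite S_INR in Hle.
  apply Rmult_lt_compat_r with (r := eps^2) in HK; auto.
  unfold Rdiv in HK. rewrite Rmult_assoc, Rinv_l in HK by lra. lra.
Qed.

Definition separates (n1 n2 : nat) (c : nat -> bool) : Prop :=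
  exists m, (n1 < m <= n2)%nat /\ c m = true.

Definition b2r (b : bool) : R := if b then 1 else 0.

Definition dipole (n1 n2 : nat) (k : nat) : R := b2r (Nat.eqb k n1) - b2r (Nat.eqb k n2).

Definition in_intervalb (m : nat) (I : interval) : bool :=
  Nat.leb (lo I) m && match hi I with Some h => Nat.leb m h | None => true end.

Lemma in_intervalb_spec m I : in_intervalb m I = true <-> in_interval m I.
Proof.
  unfold in_intervalb, in_interval. rewrite andb_true_iff, Nat.leb_le.
  destruct (hi I); [rewrite Nat.leb_le|]; tauto.
Qed.

Lemma psum_dipole (x : seqR) e n1 n2 k :
  psum (fun j => x j + e * dipole n1 n2 j) k =
  psum x k + e * (b2r (Nat.ltb n1 k) - b2r (Nat.ltb n2 k)).
Proof.
  induction k.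
  - unfold psum, b2r; simpl. lra.
  - unfold psum in *. rewrite !sum_lt_S, IHk. unfold dipole, b2r.
    destruct (Nat.ltb_spec n1 k), (Nat.ltb_spec n1 (S k)), (Nat.eqb_spec k n1);
    destruct (Nat.ltb_spec n2 k), (Nat.ltb_spec n2 (S k)), (Nat.eqb_spec k n2);
    try lia; lra.
Qed.

Lemma interval_incr_dipole (x : seqR) L e n1 n2 I : wf_interval I ->
  let y := fun j => x j + e * dipole n1 n2 j in
  interval_end y L I - psum y (lo I) =
  interval_end x L I - psum x (lo I) +
  e * (b2r (in_intervalb n1 I) - b2r (in_intervalb n2 I)).
Proof.
  intros Hw y. unfold y, interval_end, in_intervalb. unfold wf_interval in Hw.
  destruct (hi I) as [h|]; rewrite !psum_dipole; unfold b2r.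
  - destruct (Nat.ltb_spec n1 (S h)), (Nat.ltb_spec n2 (S h)),
      (Nat.ltb_spec n1 (lo I)), (Nat.ltb_spec n2 (lo I)),
      (Nat.leb_spec (lo I) n1), (Nat.leb_spec (lo I) n2),
      (Nat.leb_spec n1 h), (Nat.leb_spec n2 h); cbn [andb]; try lia; lra.
  - destruct (Nat.ltb_spec n1 (lo I)), (Nat.ltb_spec n2 (lo I)),
      (Nat.leb_spec (lo I) n1), (Nat.leb_spec (lo I) n2); cbn [andb]; try lia; lra.
Qed.

Lemma sq_dipole_le (J a e : R) (b1 b2 : bool) : Rabs a <= J ->
  (a + e * (b2r b1 - b2r b2))^2 <= a^2 + (2 * J * Rabs e + e^2) * (b2r b1 + b2r b2).
Proof.
  intros Ha.
  assert (Hae : Rabs (a * e) <= J * Rabs e)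
    by (rewrite Rabs_mult; apply Rmult_le_compat_r; auto using Rabs_pos).
  apply Rabs_le_between in Hae.
  unfold b2r. destruct b1, b2; nra.
Qed.

Lemma sum_in_interval_le1 n I m : disjoint_family n I ->
  sum_lt (fun i => b2r (in_intervalb m (I i))) n <= 1.
Proof.
  intros Hdis. apply sum_lt_at_most_one; [lra|].
  intros i j Hi Hj Ei Ej. destruct (Nat.eq_dec i j) as [|Hne]; auto. exfalso.
  apply in_intervalb_spec in Ei. apply in_intervalb_spec in Ej.
  apply (Hdis i j Hi Hj Hne m). auto.
Qed.

Lemma sum_sq_dipole_le n1 n2 n I (J e : R) (sx : nat -> R) : 0 <= J ->
  disjoint_family n I -> (forall i, (i < n)%nat -> Rabs (sx i) <= J) ->
  sum_lt (fun i => (sx i + e * (b2r (in_intervalb n1 (I i)) - b2r (in_intervalb n2 (I i))))^2) n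
  <= sum_lt (fun i => (sx i)^2) n + 2 * (2 * J * Rabs e + e^2).
Proof.
  intros HJ0 Hdis Habs. set (K := 2 * J * Rabs e + e^2).
  assert (HK : 0 <= K) by (unfold K; pose proof (Rabs_pos e); nra).
  eapply Rle_trans.
  { apply sum_lt_le with (g := fun i => (sx i)^2 +
      (K * b2r (in_intervalb n1 (I i)) + K * b2r (in_intervalb n2 (I i)))).
    intros i Hi. rewrite <- Rmult_plus_distr_l. apply sq_dipole_le; auto. }
  rewrite !sum_lt_plus, !sum_lt_scal.
  pose proof (sum_in_interval_le1 n I n1 Hdis). pose proof (sum_in_interval_le1 n I n2 Hdis).
  nra.
Qed.

Lemma family_cuts_separates n1 n2 n I i0 : (n1 < n2)%nat ->
  (i0 < n)%nat -> wf_interval (I i0) ->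
  in_intervalb n1 (I i0) <> in_intervalb n2 (I i0) -> separates n1 n2 (family_cuts n I).
Proof.
  intros Hn Hi0 Hw Hne.
  assert (Hcut : forall m, (lo (I i0) = m \/ hi (I i0) = Some (pred m) /\ (0 < m)%nat) ->
                 family_cuts n I m = true)
    by (intros m Hm; apply holds_spec; exists i0; auto).
  assert (Hin : forall m, in_intervalb m (I i0) = true -> in_interval m (I i0))
    by (intros m; apply in_intervalb_spec).
  assert (Hout : forall m, in_intervalb m (I i0) = false -> ~ in_interval m (I i0))
    by (intros m E Hm; apply in_intervalb_spec in Hm; congruence).
  unfold wf_interval in Hw.
  destruct (in_intervalb n1 (I i0)) eqn:E1, (in_intervalb n2 (I i0)) eqn:E2; try congruence.
  - apply Hin in E1. apply Hout in E2. unfold in_interval in E1, E2.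
    destruct (hi (I i0)) as [h|] eqn:Eh; [|exfalso; apply E2; split; [lia|auto]].
    exists (S h). split; [|apply Hcut; right; split; [auto|lia]].
    destruct (Nat.le_gt_cases n2 h); [exfalso; apply E2; split; lia|lia].
  - apply Hout in E1. apply Hin in E2. unfold in_interval in E1, E2.
    exists (lo (I i0)). split; [|apply Hcut; auto].
    split; [|tauto]. destruct (Nat.le_gt_cases (lo (I i0)) n1); auto. exfalso. apply E1.
    split; [lia|]. destruct (hi (I i0)); [lia|auto].
Qed.

Section Dipole.
Variables (x : seqR) (J L : R) (n1 n2 : nat) (eta : R).
Hypothesis HJ : Jnorm x = Finite J.
Hypothesis HL : is_lim_seq (psum x) L.
Hypothesis Hn12 : (n1 < n2)%nat.
Hypothesis Heta : 0 < eta.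
Hypothesis HJ1 : J <= 1.
Hypothesis Hsep : forall c M, separates n1 n2 c -> cut_value x L c M <= J^2 - eta.

Lemma Jvalues_dipole_le e v : Rabs e <= Rmin 1 (eta / 6) ->
  Jvalues (fun j => x j + e * dipole n1 n2 j) v -> v <= J.
Proof.
  intros He [n [I [s [H1 [H2 [H3 ->]]]]]].
  set (y := fun j => x j + e * dipole n1 n2 j) in *.
  pose proof (Jnorm_nonneg x J HJ) as HJ0.
  assert (HLy : is_lim_seq (psum y) L).
  { eapply is_lim_seq_ext_loc; [|apply HL]. exists (S n2). intros k Hk.
    unfold y. rewrite psum_dipole. unfold b2r.
    destruct (Nat.ltb_spec n1 k), (Nat.ltb_spec n2 k); try lia. lra. }
  set (sx := fun i => interval_end x L (I i) - psum x (lo (I i))).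
  set (d := fun i => b2r (in_intervalb n1 (I i)) - b2r (in_intervalb n2 (I i))).
  assert (Hs : forall i, (i < n)%nat -> s i = sx i + e * d i).
  { intros i Hi. specialize (H3 i Hi).
    apply (interval_sum_iff y L _ _ HLy (H1 i Hi)) in H3. rewrite H3.
    apply interval_incr_dipole; auto. }
  assert (Hsx : forall i, (i < n)%nat -> interval_sum x (I i) (sx i))
    by (intros i Hi; apply (interval_sum_iff x L _ _ HL (H1 i Hi)); auto).
  assert (Hx : sum_lt (fun i => (sx i)^2) n <= J^2) by (apply (sum_sq_family_le x J HJ n I); auto).
  enough (sum_lt (fun i => (s i)^2) n <= J^2).
  { rewrite <- (sqrt_pow2 J HJ0). apply sqrt_le_1_alt. auto. }
  destruct (classic (exists i, (i < n)%nat /\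
                       in_intervalb n1 (I i) <> in_intervalb n2 (I i))) as [[i0 [Hi0 Hne]]|Hno].
  - destruct (family_le_cut_value x L HL n I sx H1 H2 Hsx) as [M HM].
    specialize (Hsep _ M (family_cuts_separates n1 n2 n I i0 Hn12 Hi0 (H1 i0 Hi0) Hne)).
    pose proof (sum_sq_dipole_le n1 n2 n I J e sx HJ0 H2
                  (fun i Hi => interval_sum_abs_le x J HJ (I i) (sx i) (H1 i Hi) (Hsx i Hi))).
    rewrite (sum_lt_ext _ (fun i => (sx i + e * d i)^2)) by (intros; rewrite Hs; auto).
    pose proof (Rabs_pos e). pose proof (Rmin_l 1 (eta / 6)). pose proof (Rmin_r 1 (eta / 6)).
    assert (2 * J * Rabs e + e^2 <= eta / 2) by (rewrite <- (pow2_abs e); nra).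
    unfold d. nra.
  - rewrite (sum_lt_ext _ (fun i => (sx i)^2)); auto.
    intros i Hi. rewrite Hs by auto. unfold d.
    destruct (in_intervalb n1 (I i)) eqn:E1, (in_intervalb n2 (I i)) eqn:E2;
      unfold b2r; try lra;
      exfalso; apply Hno; exists i; rewrite E1, E2; split; auto; discriminate.
Qed.

Lemma BJ_dipole e : Rabs e <= Rmin 1 (eta / 6) -> BJ (fun j => x j + e * dipole n1 n2 j).
Proof.
  intros He. unfold BJ, Jnorm.
  apply (proj2 (Lub_Rbar_correct (Jvalues (fun j => x j + e * dipole n1 n2 j)))).
  intros v Hv. simpl. eapply Rle_trans; [apply (Jvalues_dipole_le e)|]; auto.
Qed.

End Dipole.

Lemma extreme_point_separating_cuts (x : seqR) (J L : R) (n1 n2 : nat) :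
  Jnorm x = Finite J -> J <= 1 -> is_lim_seq (psum x) L ->
  extreme_point_BJ x -> (n1 < n2)%nat ->
  forall eta, 0 < eta -> exists c M, separates n1 n2 c /\ J^2 - eta < cut_value x L c M.
Proof.
  intros HJ HJ1 HL [_ Hext] Hn eta Heta. apply NNPP. intros H.
  assert (Hsep : forall c M, separates n1 n2 c -> cut_value x L c M <= J^2 - eta).
  { intros c M Hc. apply Rnot_lt_le. intro Hlt. apply H. exists c, M; auto. }
  set (eps := Rmin 1 (eta / 6)).
  assert (Heps : 0 < eps) by (apply Rmin_glb_lt; lra).
  destruct (Hext (fun j => x j + eps * dipole n1 n2 j)
                 (fun j => x j + (- eps) * dipole n1 n2 j) (/2)) as [Hy _].
  - apply (BJ_dipole x J L n1 n2 eta); auto. rewrite Rabs_right by lra. apply Rle_refl.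
  - apply (BJ_dipole x J L n1 n2 eta); auto.
    rewrite Rabs_left, Ropp_involutive by lra. apply Rle_refl.
  - lra.
  - intros k. lra.
  - specialize (Hy n1). unfold dipole, b2r in Hy. rewrite Nat.eqb_refl in Hy.
    destruct (Nat.eqb_spec n1 n2); [lia|]. lra.
Qed.

Definition infinitely_often (P : nat -> Prop) : Prop := forall K, exists k, (K <= k)%nat /\ P k.

(* [cluster_prefix cs n] is the length-[n] prefix of a cluster point of [cs],
   extended one bit at a time so that infinitely many [cs k] follow it. *)
Fixpoint cluster_prefix (cs : nat -> nat -> bool) (n : nat) : nat -> bool :=
  match n with
  | O => fun _ => false
  | S n => let g := cluster_prefix cs n in
     let b := holds (infinitely_often
                (fun k => (forall m, (m < n)%nat -> cs k m = g m) /\ cs k n = true)) in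
     fun m => if Nat.ltb m n then g m else b
  end.

Lemma bool_seqs_cluster (cs : nat -> nat -> bool) :
  exists g : nat -> bool, forall N K, exists k, (K <= k)%nat /\
    forall m, (m <= N)%nat -> cs k m = g m.
Proof.
  set (g := fun m => cluster_prefix cs (S m) m).
  assert (Hg : forall n m, (m < n)%nat -> cluster_prefix cs n m = g m).
  { induction n as [|n IH]; intros m Hm; [lia|]. simpl.
    destruct (Nat.ltb_spec m n); [apply IH; auto|].
    assert (m = n) by lia. subst m. unfold g. simpl. rewrite Nat.ltb_irrefl. auto. }
  assert (Hinf : forall n, infinitely_often
                   (fun k => forall m, (m < n)%nat -> cs k m = cluster_prefix cs n m)).
  { induction n as [|n IH]; [intros K; exists K; split; auto; intros; lia|].
    simpl. unfold holds. destruct excluded_middle_informative as [Eb|Eb].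
    - intros K. destruct (Eb K) as [k [Hk [H1 H2]]]. exists k. split; auto.
      intros m Hm. destruct (Nat.ltb_spec m n); auto. now replace m with n by lia.
    - apply not_all_ex_not in Eb. destruct Eb as [K0 HK0].
      intros K. destruct (IH (Nat.max K K0)) as [k [Hk H1]]. exists k. split; [lia|].
      intros m Hm. destruct (Nat.ltb_spec m n); auto. replace m with n by lia.
      apply not_true_is_false. intros E. apply HK0. exists k. split; [lia|auto]. }
  exists g. intros N K. destruct (Hinf (S N) K) as [k [Hk H]]. exists k. split; auto.
  intros m Hm. rewrite H by lia. apply Hg. lia.
Qed.

Lemma small_eps_exists (K delta : R) : 0 <= K -> 0 < delta ->
  exists eps, 0 < eps /\ 4 * K * eps + 4 * eps^2 <= delta.
Proof.
  intros HK Hd.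
  set (e := Rmin 1 (delta / (4 * K + 4))).
  assert (He1 : e <= 1) by apply Rmin_l.
  assert (He2 : e <= delta / (4 * K + 4)) by apply Rmin_r.
  assert (He0 : 0 < e) by (apply Rmin_glb_lt; [lra|apply Rdiv_lt_0_compat; lra]).
  exists e. split; auto.
  assert ((4 * K + 4) * e <= delta).
  { apply Rmult_le_compat_l with (r := 4 * K + 4) in He2; [|lra].
    unfold Rdiv in He2. rewrite <- Rmult_assoc, (Rmult_comm (4 * K + 4) delta),
      Rmult_assoc, Rinv_r in He2 by lra. lra. }
  nra.
Qed.

Definition leaves (N : nat) (c : nat -> bool) (m : nat) : bool :=
  match next_cut c m with Some k => Nat.ltb N k | None => true end.

Lemma leaves_start_unique c N i j : (i <= N)%nat -> (j <= N)%nat ->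
  is_start c i && leaves N c i = true -> is_start c j && leaves N c j = true -> i = j.
Proof.
  intros Hi Hj Ei Ej. apply andb_prop in Ei, Ej.
  assert (Hgen : forall a b, (a < b <= N)%nat -> is_start c b = true ->
                 leaves N c a = true -> False).
  { intros a b Hab Hb Ha. destruct (next_cut_before_start c a b ltac:(lia) Hb) as [k [Ek Hk]].
    unfold leaves in Ha. rewrite Ek in Ha. apply Nat.ltb_lt in Ha. lia. }
  destruct (Nat.lt_total i j) as [Hl|[Hl|Hl]]; auto; exfalso.
  - apply (Hgen i j); tauto || lia.
  - apply (Hgen j i); tauto || lia.
Qed.

Section Compactness.
Variables (x : seqR) (J L : R).
Hypothesis HJ : Jnorm x = Finite J.
Hypothesis HL : is_lim_seq (psum x) L.

Lemma cell_end_leaves_close eps N c m :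
  0 <= eps -> (forall p, (N < p)%nat -> Rabs (psum x p - L) <= eps) ->
  leaves N c m = true -> Rabs (cell_end x L c m - L) <= eps.
Proof.
  intros He Hp. unfold leaves, cell_end. destruct (next_cut c m).
  - intros H. apply Nat.ltb_lt in H. apply Hp; auto.
  - intros _. unfold Rminus. rewrite Rplus_opp_r, Rabs_R0. auto.
Qed.

Lemma cell_sq_close eps N c c' m :
  0 <= eps -> (forall p, (N < p)%nat -> Rabs (psum x p - L) <= eps) ->
  (forall j, (j <= N)%nat -> c j = c' j) -> (m <= N)%nat ->
  cell_sq x L c m <= cell_sq x L c' m +
    (if is_start c m && leaves N c m then 4 * J * eps + 4 * eps^2 else 0).
Proof.
  intros He Hp Hcc Hm. pose proof (Jnorm_nonneg x J HJ) as HJ0.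
  assert (Hnext : forall c1 c2 k, (forall j, (j <= N)%nat -> c1 j = c2 j) ->
            next_cut c1 m = Some k -> (k <= N)%nat -> next_cut c2 m = Some k).
  { intros c1 c2 k H12 E Hk. apply (next_cut_ext_Some c1 c2 m k E). intros; apply H12; lia. }
  assert (Est : is_start c m = is_start c' m) by (unfold is_start; rewrite Hcc by lia; auto).
  unfold cell_sq. rewrite <- Est. destruct (is_start c m) eqn:Es; simpl; [|lra].
  destruct (leaves N c m) eqn:Eb.
  - assert (Eb' : leaves N c' m = true).
    { unfold leaves in *. destruct (next_cut c' m) as [k|] eqn:E'; auto.
      apply Nat.ltb_lt. destruct (Nat.le_gt_cases k N) as [Hk|Hk]; auto.
      rewrite (Hnext c' c k (fun j Hj => eq_sym (Hcc j Hj)) E' Hk) in Eb.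
      apply Nat.ltb_lt in Eb. lia. }
    pose proof (cell_end_leaves_close eps N c m He Hp Eb).
    pose proof (cell_end_leaves_close eps N c' m He Hp Eb').
    pose proof (cell_incr_abs_le x J L HJ HL c' m ltac:(rewrite <- Est; auto)) as Hu.
    set (u := cell_end x L c' m - psum x m) in *.
    set (v := cell_end x L c m - cell_end x L c' m).
    assert (Hv : Rabs v <= 2 * eps).
    { unfold v. replace (cell_end x L c m - cell_end x L c' m) with
        ((cell_end x L c m - L) - (cell_end x L c' m - L)) by ring.
      eapply Rle_trans; [apply Rabs_triang|]. rewrite Rabs_Ropp. lra. }
    replace (cell_end x L c m - psum x m) with (u + v) by (unfold u, v; ring).
    assert (u * v <= J * (2 * eps)).
    { eapply Rle_trans; [apply Rle_abs|]. rewrite Rabs_mult.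
      apply Rmult_le_compat; auto using Rabs_pos. }
    assert (v^2 <= (2 * eps)^2) by (rewrite <- pow2_abs; apply pow_incr; auto using Rabs_pos).
    nra.
  - unfold leaves in Eb. destruct (next_cut c m) as [k|] eqn:E; [|discriminate].
    apply Nat.ltb_ge in Eb. unfold cell_end. rewrite E, (Hnext c c' k Hcc E Eb). lra.
Qed.

Lemma cut_value_close eps N c c' :
  0 <= eps -> (forall p, (N < p)%nat -> Rabs (psum x p - L) <= eps) ->
  (forall j, (j <= N)%nat -> c j = c' j) ->
  cut_value x L c (S N) <= cut_value x L c' (S N) + (4 * J * eps + 4 * eps^2).
Proof.
  intros He Hp Hcc. pose proof (Jnorm_nonneg x J HJ) as HJ0.
  unfold cut_value.
  eapply Rle_trans; [apply sum_lt_le; intros m Hm; apply (cell_sq_close eps N c c'); auto; lia|].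
  rewrite sum_lt_plus. apply Rplus_le_compat_l.
  apply sum_lt_at_most_one; [nra|].
  intros i j Hi Hj. apply leaves_start_unique; lia.
Qed.

Lemma psum_tail_close eps : 0 < eps ->
  exists N, forall p, (N < p)%nat -> Rabs (psum x p - L) <= eps.
Proof.
  intros He. apply is_lim_seq_spec in HL. destruct (HL (mkposreal eps He)) as [N HN].
  exists N. intros p Hp. left. apply HN. lia.
Qed.

Hypothesis Hsup : forall eta, 0 < eta -> exists c M, J^2 - eta < cut_value x L c M.

(* Splicing a nearly norming cut set in front of [c] leaves the tail of [c]
   unchanged, so this tail is small. *)
Lemma cut_value_tail_small delta : 0 < delta -> exists N0, forall N, (N0 <= N)%nat ->
  forall c M, (S (S N) <= M)%nat -> cut_value x L c M - cut_value x L c (S (S N)) <= delta.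
Proof.
  intros Hd. pose proof (Jnorm_nonneg x J HJ) as HJ0.
  destruct (Hsup (delta / 3) ltac:(lra)) as [h [M0 Hh]].
  destruct (small_eps_exists J (delta / 3) HJ0 ltac:(lra)) as [eps [He Heps]].
  destruct (psum_tail_close eps He) as [N1 HN1].
  exists (Nat.max M0 N1). intros N HN c M HM.
  set (c' := fun m => if Nat.leb m N then h m else if Nat.eqb m (S N) then true else c m).
  pose proof (cut_value_le x J L HJ HL c' M) as H1.
  assert (H2 : cut_value x L c' M - cut_value x L c' (S (S N)) =
               cut_value x L c M - cut_value x L c (S (S N))).
  { apply sum_lt_tail; auto. intros m Hm. apply cell_sq_ext.
    - unfold is_start, c'. destruct (Nat.leb_spec m N); [lia|].
      destruct (Nat.eqb_spec m (S N)); [lia|auto].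
    - intros _. apply next_cut_ext. intros k Hk. unfold c'.
      destruct (Nat.leb_spec k N); [lia|]. destruct (Nat.eqb_spec k (S N)); [lia|auto]. }
  assert (H3 : cut_value x L h (S N) <= cut_value x L c' (S N) + (4 * J * eps + 4 * eps^2)).
  { apply cut_value_close; [lra|intros p Hp; apply HN1; lia|].
    intros m Hm. unfold c'. destruct (Nat.leb_spec m N); [auto|lia]. }
  pose proof (cut_value_mono x L h M0 (S N) ltac:(lia)).
  pose proof (cut_value_mono x L c' (S N) (S (S N)) ltac:(lia)).
  lra.
Qed.

End Compactness.

Lemma separating_norming_cut_set (x : seqR) (J L : R) (n1 n2 : nat) :
  Jnorm x = Finite J -> is_lim_seq (psum x) L ->
  (forall eta, 0 < eta -> exists c M, separates n1 n2 c /\ J^2 - eta < cut_value x L c M) ->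
  exists g, separates n1 n2 g /\ forall eta, 0 < eta -> exists M, J^2 - eta < cut_value x L g M.
Proof.
  intros HJ HL Hsep. pose proof (Jnorm_nonneg x J HJ) as HJ0.
  assert (Hch : forall k : nat, exists p : (nat -> bool) * nat,
     separates n1 n2 (fst p) /\ J^2 - / INR (S k) < cut_value x L (fst p) (snd p)).
  { intros k. destruct (Hsep (/ INR (S k))) as [c [M H]].
    - apply Rinv_0_lt_compat, lt_0_INR. lia.
    - exists (c, M). auto. }
  destruct (choice _ Hch) as [p Hp].
  destruct (bool_seqs_cluster (fun k => fst (p k))) as [g Hg].
  exists g. split.
  { destruct (Hg n2 0%nat) as [k [_ Hk]]. destruct (Hp k) as [[m [Hm1 Hm2]] _].
    exists m. split; auto. rewrite <- Hk by lia. auto. }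
  assert (Hsup : forall e, 0 < e -> exists c M, J^2 - e < cut_value x L c M).
  { intros e He. destruct (Hsep e He) as [c [M [_ H]]]. eauto. }
  intros eta Heta.
  destruct (cut_value_tail_small x J L HJ HL Hsup (eta / 3) ltac:(lra)) as [N0 HN0].
  destruct (small_eps_exists J (eta / 3) HJ0 ltac:(lra)) as [eps [He Heps]].
  destruct (psum_tail_close x L HL eps He) as [N1 HN1].
  set (N := Nat.max N0 N1).
  destruct (archimed_cor1 (eta / 3) ltac:(lra)) as [K0 [HK0 HK0pos]].
  destruct (Hg (S N) K0) as [k [Hk Hagree]].
  exists (S (S N)).
  destruct (Hp k) as [_ Hv]. set (c := fst (p k)) in *. set (M := snd (p k)) in *.
  assert (Hinv : / INR (S k) <= eta / 3).
  { eapply Rle_trans; [|left; apply HK0].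
    apply Rinv_le_contravar; [apply lt_0_INR; lia|apply le_INR; lia]. }
  assert (Htail : cut_value x L c M <= cut_value x L c (S (S N)) + eta / 3).
  { destruct (Nat.le_gt_cases (S (S N)) M) as [Hle|Hlt].
    - pose proof (HN0 N ltac:(lia) c M Hle). lra.
    - pose proof (cut_value_mono x L c M (S (S N)) ltac:(lia)). lra. }
  assert (cut_value x L c (S (S N)) <= cut_value x L g (S (S N)) + (4 * J * eps + 4 * eps^2)).
  { apply (cut_value_close x J L HJ HL); [lra|intros q Hq; apply HN1; lia|].
    intros m Hm. apply Hagree. auto. }
  lra.
Qed.

Definition first_supp (x : seqR) (a : nat) : nat :=
  match excluded_middle_informative (exists m, (a <= m)%nat /\ x m <> 0) with
  | left H => proj1_sig (constructive_indefinite_description _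
                 (least_above (fun m => x m <> 0) a H))
  | right _ => a
  end.

Lemma first_supp_spec x a : (exists m, (a <= m)%nat /\ x m <> 0) ->
  (a <= first_supp x a)%nat /\ x (first_supp x a) <> 0 /\
  forall j, (a <= j < first_supp x a)%nat -> x j = 0.
Proof.
  intros H. unfold first_supp. destruct excluded_middle_informative; [|tauto].
  destruct constructive_indefinite_description as [m [H1 [H2 H3]]]; simpl.
  split; auto. split; auto. intros j Hj. apply NNPP. apply H3; auto.
Qed.

(* Every start of [g] is moved to the first point of the support at or after it. *)
Definition support_cuts (x : seqR) (g : nat -> bool) (m : nat) : bool :=
  holds (x m <> 0 /\ exists k, (k <= m)%nat /\ is_start g k = true /\
           forall j, (k <= j < m)%nat -> x j = 0).

Lemma support_cuts_supp x g m : support_cuts x g m = true -> x m <> 0.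
Proof. unfold support_cuts. rewrite holds_spec. tauto. Qed.

Lemma support_cuts_intro x g m k : x m <> 0 -> (k <= m)%nat -> is_start g k = true ->
  (forall j, (k <= j < m)%nat -> x j = 0) -> support_cuts x g m = true.
Proof. intros. unfold support_cuts. apply holds_spec. split; eauto. Qed.

Section SupportCuts.
Variables (x : seqR) (L : R) (g : nat -> bool).
Hypothesis HL : is_lim_seq (psum x) L.

Lemma support_cuts_after a p j : (a <= p)%nat -> x p <> 0 -> (p < j)%nat ->
  support_cuts x g j = true -> exists k, (p < k <= j)%nat /\ g k = true.
Proof.
  intros Hap Hp Hpj Hj. unfold support_cuts in Hj. rewrite holds_spec in Hj.
  destruct Hj as [_ [k [Hk [Hst Hz]]]].
  exists k. destruct (Nat.le_gt_cases k p).
  - exfalso. apply Hp. apply Hz. lia.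
  - split; [lia|]. rewrite is_start_pos in Hst by lia. auto.
Qed.

Lemma cell_incr_support a : is_start g a = true ->
  cell_end x L g a - psum x a <> 0 ->
  exists m, (a <= m)%nat /\ x m <> 0 /\
    match next_cut g a with Some k => (m < k)%nat | None => True end.
Proof.
  intros Hst Ht. apply NNPP. intro Hn. apply Ht. unfold cell_end.
  destruct (next_cut g a) as [k|] eqn:Ek.
  - apply next_cut_Some in Ek. rewrite (psum_const x a k); [ring|lia|].
    intros j Hj. apply NNPP. intro Hxj. apply Hn. exists j. split; [lia|split; auto; lia].
  - rewrite (lim_psum_eventually_const x L a HL); [ring|].
    intros j Hj. apply NNPP. intro Hxj. apply Hn. exists j; auto.
Qed.

Lemma support_cuts_cell_end a p : is_start g a = true -> (a <= p)%nat -> x p <> 0 ->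
  match next_cut g a with Some k => (p < k)%nat | None => True end ->
  cell_end x L (support_cuts x g) p = cell_end x L g a.
Proof.
  intros Hst Hap Hp Hpk. unfold cell_end. destruct (next_cut g a) as [k|] eqn:Ek.
  - pose proof (next_cut_Some _ _ _ Ek) as [Ek1 [Ek2 Ek3]].
    assert (Hno : forall j, (p < j)%nat -> support_cuts x g j = true -> (k <= j)%nat).
    { intros j Hj Hj'. destruct (support_cuts_after a p j Hap Hp Hj Hj') as [k0 [Hk0 Hgk0]].
      destruct (Nat.le_gt_cases k k0); [lia|]. rewrite Ek3 in Hgk0 by lia. discriminate. }
    destruct (classic (exists m, (k <= m)%nat /\ x m <> 0)) as [Hq|Hq].
    + destruct (first_supp_spec x k Hq) as [Hq1 [Hq2 Hq3]].
      rewrite (next_cut_Some_intro (support_cuts x g) p (first_supp x k)).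
      * apply psum_const; auto.
      * lia.
      * apply (support_cuts_intro x g _ k); auto. apply is_start_cut; auto.
      * intros j Hj. apply not_true_is_false. intros E.
        pose proof (Hno j ltac:(lia) E). apply (support_cuts_supp x g j E). apply Hq3. lia.
    + rewrite next_cut_None_intro.
      * apply (lim_psum_eventually_const x L k HL). intros j Hj. apply NNPP. intro Hxj.
        apply Hq. exists j; auto.
      * intros j Hj. apply not_true_is_false. intros E.
        pose proof (Hno j Hj E). apply Hq. exists j. split; auto.
        apply (support_cuts_supp x g j E).
  - rewrite next_cut_None_intro; auto.
    intros j Hj. apply not_true_is_false. intros E.
    destruct (support_cuts_after a p j Hap Hp Hj E) as [k0 [Hk0 Hgk0]].
    rewrite (next_cut_None g a Ek k0) in Hgk0 by lia. discriminate.
Qed.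

Lemma cell_sq_support_cuts a : is_start g a = true -> cell_sq x L g a <> 0 ->
  exists p, (a <= p)%nat /\
    match next_cut g a with Some k => (p < k)%nat | None => True end /\
    cell_sq x L (support_cuts x g) p = cell_sq x L g a.
Proof.
  intros Hst Ht.
  destruct (cell_incr_support a Hst) as [m [Hm1 [Hm2 Hm3]]].
  { intros E. apply Ht. unfold cell_sq. rewrite Hst, E. simpl. ring. }
  destruct (first_supp_spec x a (ex_intro _ m (conj Hm1 Hm2))) as [Hp1 [Hp2 Hp3]].
  set (p := first_supp x a) in *.
  assert (Hpm : (p <= m)%nat).
  { destruct (Nat.le_gt_cases p m); auto. exfalso. apply Hm2. apply Hp3. lia. }
  assert (Hpk : match next_cut g a with Some k => (p < k)%nat | None => True end)
    by (destruct (next_cut g a); auto; lia).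
  exists p. split; auto. split; auto.
  assert (HSp : psum x p = psum x a) by (apply psum_const; auto).
  unfold cell_sq. rewrite Hst, is_start_cut by (apply (support_cuts_intro x g p a); auto).
  rewrite HSp, (support_cuts_cell_end a p); auto.
Qed.

Lemma cut_value_support_cuts_ge M :
  exists M', cut_value x L g M <= cut_value x L (support_cuts x g) M'.
Proof.
  set (P := fun a => holds (cell_sq x L g a <> 0)).
  assert (HP : forall a, P a = true -> is_start g a = true /\ cell_sq x L g a <> 0).
  { intros a Ha. unfold P in Ha. rewrite holds_spec in Ha. split; auto.
    apply not_false_iff_true. intros E. apply Ha. unfold cell_sq. rewrite E. auto. }
  assert (Hch : forall a, exists p, P a = true -> (a <= p)%nat /\
     match next_cut g a with Some k => (p < k)%nat | None => True end /\
     cell_sq x L (support_cuts x g) p = cell_sq x L g a).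
  { intros a. destruct (P a) eqn:Ea; [|exists 0%nat; discriminate].
    destruct (HP a Ea) as [H1 H2]. destruct (cell_sq_support_cuts a H1 H2) as [p Hp].
    exists p. auto. }
  destruct (choice _ Hch) as [phi Hphi].
  destruct (nat_fun_bounded phi M) as [B HB]. exists B. unfold cut_value.
  rewrite (sum_lt_ext (cell_sq x L g)
             (fun a => if P a then cell_sq x L (support_cuts x g) (phi a) else 0)).
  2:{ intros a Ha. destruct (P a) eqn:E.
      - symmetry. apply Hphi; auto.
      - unfold P in E. rewrite <- not_true_iff_false, holds_spec in E. apply NNPP; auto. }
  apply sum_lt_reindex_le; auto using cell_sq_nonneg.
  assert (Hlt : forall a b, (a < b)%nat -> P a = true -> P b = true -> (phi a < phi b)%nat).
  { intros a b Hab Pa Pb. destruct (Hphi a Pa) as [_ [Ha _]].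
    destruct (Hphi b Pb) as [Hb _].
    destruct (next_cut_before_start g a b Hab (proj1 (HP b Pb))) as [k [Ek Hk]].
    rewrite Ek in Ha. lia. }
  intros i j _ _ Pi Pj E. destruct (Nat.lt_total i j) as [Hl|[Hl|Hl]]; auto.
  - specialize (Hlt i j Hl Pi Pj). lia.
  - specialize (Hlt j i Hl Pj Pi). lia.
Qed.

End SupportCuts.

Definition add_cut (c : nat -> bool) (b : nat) (m : nat) : bool :=
  if Nat.eqb m b then true else c m.

Definition remove_cut (c : nat -> bool) (b : nat) (m : nat) : bool :=
  if Nat.eqb m b then false else c m.

Lemma last_start (c : nat -> bool) m : exists a, (a <= m)%nat /\ is_start c a = true /\
  forall j, (a < j <= m)%nat -> c j = false.
Proof.
  induction m as [|m [a [H1 [H2 H3]]]].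
  - exists 0%nat. split; auto. split; [reflexivity|]. intros; lia.
  - destruct (c (S m)) eqn:E.
    + exists (S m). split; auto. split; [apply is_start_cut; auto|]. intros; lia.
    + exists a. split; [lia|]. split; auto. intros j Hj.
      destruct (Nat.eq_dec j (S m)); [subst; auto|]. apply H3; lia.
Qed.

Lemma next_cut_skip c a b : (a <= b)%nat ->
  (forall j, (a < j <= b)%nat -> c j = false) -> next_cut c a = next_cut c b.
Proof.
  intros Hab Hgap. destruct (next_cut c b) as [e|] eqn:Ee.
  - apply next_cut_Some in Ee. destruct Ee as [Ee1 [Ee2 Ee3]].
    apply next_cut_Some_intro; [lia|auto|].
    intros j Hj. destruct (Nat.le_gt_cases j b); [apply Hgap; lia|apply Ee3; lia].
  - apply next_cut_None_intro. intros j Hj.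
    destruct (Nat.le_gt_cases j b); [apply Hgap; lia|apply (next_cut_None c b Ee); lia].
Qed.

Lemma is_start_change c c' b m : (forall m, m <> b -> c' m = c m) -> m <> b ->
  is_start c' m = is_start c m.
Proof. intros H Hm. unfold is_start. rewrite H; auto. Qed.

Lemma cell_sq_change_one x L c c' a b : (a < b)%nat -> is_start c a = true ->
  (forall j, (a < j < b)%nat -> c j = false) -> (forall m, m <> b -> c' m = c m) ->
  forall m, m <> a -> m <> b -> cell_sq x L c' m = cell_sq x L c m.
Proof.
  intros Hab Ha Hgap Hc' m Hma Hmb.
  assert (Hst : is_start c' m = is_start c m) by (apply (is_start_change c c' b); auto).
  apply cell_sq_ext; auto. rewrite Hst. intros Hs.
  destruct (Nat.lt_total m b) as [Hl|[Hl|Hl]]; [|lia|].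
  - destruct (Nat.lt_total m a) as [Hl2|[Hl2|Hl2]]; [|lia|].
    + destruct (next_cut_before_start c m a Hl2 Ha) as [k [Ek Hk]]. rewrite Ek.
      apply (next_cut_ext_Some c c' m k Ek). intros j Hj. rewrite Hc'; auto. lia.
    + rewrite is_start_pos, Hgap in Hs by lia. discriminate.
  - apply next_cut_ext. intros k Hk. rewrite Hc'; auto. lia.
Qed.

Section NormingCuts.
Variables (x : seqR) (J L : R) (c : nat -> bool).
Hypothesis HJ : Jnorm x = Finite J.
Hypothesis HL : is_lim_seq (psum x) L.
Hypothesis Hnorm : forall eta, 0 < eta -> exists M, J^2 - eta < cut_value x L c M.

Lemma norming_change_two_le c' a b : a <> b ->
  (forall m, m <> a -> m <> b -> cell_sq x L c' m = cell_sq x L c m) ->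
  (cell_sq x L c' a - cell_sq x L c a) + (cell_sq x L c' b - cell_sq x L c b) <= 0.
Proof.
  intros Hab H. apply Rnot_lt_le. intro Hpos.
  destruct (Hnorm _ Hpos) as [M HM].
  set (M' := Nat.max M (S (Nat.max a b))).
  pose proof (cut_value_mono x L c M M' ltac:(lia)).
  pose proof (cut_value_le x J L HJ HL c' M').
  assert (cut_value x L c' M' = cut_value x L c M' +
            (cell_sq x L c' a - cell_sq x L c a) + (cell_sq x L c' b - cell_sq x L c b))
    by (apply sum_lt_update2; auto; lia).
  lra.
Qed.

Lemma norming_merge_le a b : (a < b)%nat -> is_start c a = true ->
  (forall j, (a < j < b)%nat -> c j = false) -> c b = true ->
  (psum x b - psum x a) * (cell_end x L c b - psum x b) <= 0.
Proof.
  intros Hab Ha Hgap Hb. set (c' := remove_cut c b).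
  assert (Hchange : forall m, m <> b -> c' m = c m)
    by (intros m Hm; unfold c', remove_cut; destruct (Nat.eqb_spec m b); [lia|auto]).
  assert (E1 : cell_sq x L c' a = (cell_end x L c b - psum x a)^2).
  { unfold cell_sq, cell_end. rewrite (is_start_change c c' b), Ha by (auto; lia).
    rewrite (next_cut_skip c' a b); [|lia|].
    - rewrite (next_cut_ext c' c b); auto. intros k Hk. apply Hchange. lia.
    - intros j Hj. unfold c', remove_cut.
      destruct (Nat.eqb_spec j b); auto. apply Hgap. lia. }
  assert (E2 : cell_sq x L c' b = 0).
  { unfold cell_sq. rewrite is_start_pos by lia. unfold c', remove_cut.
    now rewrite Nat.eqb_refl. }
  assert (E3 : cell_sq x L c a = (psum x b - psum x a)^2).
  { unfold cell_sq, cell_end. now rewrite Ha, (next_cut_Some_intro c a b). }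
  assert (E4 : cell_sq x L c b = (cell_end x L c b - psum x b)^2).
  { unfold cell_sq. now rewrite is_start_cut. }
  pose proof (norming_change_two_le c' a b ltac:(lia)
                (cell_sq_change_one x L c c' a b Hab Ha Hgap Hchange)) as Hle.
  rewrite E1, E2, E3, E4 in Hle. nra.
Qed.

Lemma norming_split_ge a b : (a < b)%nat -> is_start c a = true ->
  (forall j, (a < j < b)%nat -> c j = false) -> c b = false ->
  0 <= (psum x b - psum x a) * (cell_end x L c a - psum x b).
Proof.
  intros Hab Ha Hgap Hb. set (c' := add_cut c b).
  assert (Hchange : forall m, m <> b -> c' m = c m)
    by (intros m Hm; unfold c', add_cut; destruct (Nat.eqb_spec m b); [lia|auto]).
  assert (Hc'b : c' b = true) by (unfold c', add_cut; now rewrite Nat.eqb_refl).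
  assert (E1 : cell_sq x L c' a = (psum x b - psum x a)^2).
  { unfold cell_sq, cell_end. rewrite (is_start_change c c' b), Ha by (auto; lia).
    rewrite (next_cut_Some_intro c' a b); auto.
    intros j Hj. rewrite Hchange by lia. auto. }
  assert (E2 : cell_sq x L c' b = (cell_end x L c a - psum x b)^2).
  { unfold cell_sq, cell_end. rewrite is_start_cut by auto.
    rewrite (next_cut_ext c' c b), (next_cut_skip c a b); auto.
    - lia.
    - intros j Hj. destruct (Nat.eq_dec j b); subst; auto. apply Hgap; lia.
    - intros k Hk. apply Hchange. lia. }
  assert (E3 : cell_sq x L c a = (cell_end x L c a - psum x a)^2).
  { unfold cell_sq. now rewrite Ha. }
  assert (E4 : cell_sq x L c b = 0).
  { unfold cell_sq. now rewrite is_start_pos, Hb by lia. }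
  pose proof (norming_change_two_le c' a b ltac:(lia)
                (cell_sq_change_one x L c c' a b Hab Ha Hgap Hchange)) as Hle.
  rewrite E1, E2, E3, E4 in Hle. nra.
Qed.

Lemma norming_consecutive_sign n1 n2 : consecutive_in_supp x n1 n2 ->
  (forall m, c m = true -> x m <> 0) -> c n2 = true -> x n1 * x n2 < 0.
Proof.
  intros [Hn [Hx1 [Hx2 Hz]]] Hsupp Hc2. unfold in_supp in *.
  destruct (last_start c n1) as [a [Ha1 [Ha2 Ha3]]].
  assert (Hgap : forall j, (a < j < n2)%nat -> c j = false).
  { intros j Hj. destruct (Nat.le_gt_cases j n1); [apply Ha3; lia|].
    apply not_true_is_false. intros E. apply (Hsupp j E), Hz. lia. }
  assert (HS1 : psum x n2 = psum x n1 + x n1).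
  { rewrite (psum_const x (S n1) n2); [reflexivity|lia|]. intros j Hj. apply Hz; lia. }
  assert (HS2 : psum x (S n2) = psum x n2 + x n2) by reflexivity.
  set (al := psum x n2 - psum x a). set (be := cell_end x L c n2 - psum x n2).
  assert (Hmerge : al * be <= 0) by (apply norming_merge_le; auto; lia).
  assert (Hsplit1 : x n1 * x n1 <= x n1 * al).
  { destruct (Nat.eq_dec a n1) as [->|Ha].
    - unfold al. rewrite HS1. lra.
    - pose proof (norming_split_ge a n1 ltac:(lia) Ha2 ltac:(intros; apply Hgap; lia)
                    ltac:(apply Ha3; lia)) as H.
      unfold cell_end in H. rewrite (next_cut_Some_intro c a n2) in H by (lia || auto).
      unfold al. rewrite HS1 in *. nra. }
  assert (Hsplit2 : x n2 * x n2 <= x n2 * be).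
  { destruct (c (S n2)) eqn:Ec.
    - unfold be, cell_end. rewrite (next_cut_Some_intro c n2 (S n2)) by (lia || auto).
      rewrite HS2. lra.
    - pose proof (norming_split_ge n2 (S n2) ltac:(lia) (is_start_cut c n2 Hc2)
                    ltac:(intros; lia) Ec) as H.
      unfold be. rewrite HS2 in H. nra. }
  assert (P1 : 0 < x n1 * x n1) by (apply Rsqr_pos_lt in Hx1; auto).
  assert (P2 : 0 < x n2 * x n2) by (apply Rsqr_pos_lt in Hx2; auto).
  assert (0 < (x n1 * al) * (x n2 * be)) by (apply Rmult_lt_0_compat; lra).
  nra.
Qed.

End NormingCuts.

Fixpoint nth_cut (c : nat -> bool) (i : nat) : option nat :=
  match i with
  | O => if c 0%nat then Some 0%nat else next_cut c 0
  | S i => match nth_cut c i with Some p => next_cut c p | None => None end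
  end.

Lemma nth_cut_cut c i p : nth_cut c i = Some p -> c p = true.
Proof.
  destruct i; simpl.
  - destruct (c 0%nat) eqn:E; [intros H; injection H; intros <-; auto|].
    intros H. apply next_cut_Some in H; tauto.
  - destruct (nth_cut c i); [|discriminate]. intros H. apply next_cut_Some in H; tauto.
Qed.

Lemma nth_cut_0_first c p : nth_cut c 0 = Some p -> forall j, (j < p)%nat -> c j = false.
Proof.
  simpl. destruct (c 0%nat) eqn:E.
  - intros H; injection H; intros <-. intros; lia.
  - intros H j Hj. apply next_cut_Some in H. destruct H as [_ [_ H]].
    destruct (Nat.eq_dec j 0); [subst; auto|]. apply H; lia.
Qed.

Lemma nth_cut_None_mono c i j : nth_cut c i = None -> (i <= j)%nat -> nth_cut c j = None.
Proof. intros H Hij. induction Hij; auto. simpl. rewrite IHHij; auto. Qed.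

Lemma nth_cut_complete c m : c m = true -> exists i, nth_cut c i = Some m.
Proof.
  induction m as [m IH] using (well_founded_induction Wf_nat.lt_wf). intros Hm.
  destruct m as [|m'].
  - exists 0%nat. simpl. rewrite Hm. auto.
  - destruct (last_start c m') as [a [Ha1 [Ha2 Ha3]]].
    assert (Hnext : next_cut c a = Some (S m'))
      by (apply next_cut_Some_intro; auto; [lia|intros k Hk; apply Ha3; lia]).
    destruct (c a) eqn:Eca.
    + destruct (IH a ltac:(lia) Eca) as [i Hi]. exists (S i). simpl. rewrite Hi. auto.
    + assert (a = 0%nat) by (unfold is_start in Ha2; rewrite Eca, orb_false_r in Ha2;
                              apply Nat.eqb_eq; auto).
      subst a. exists 0%nat. simpl. rewrite Eca. auto.
Qed.

Definition last_supp_below (x : seqR) (q : nat) : nat :=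
  match excluded_middle_informative (exists m, (m < q)%nat /\ x m <> 0) with
  | left H => proj1_sig (constructive_indefinite_description _
                 (greatest_below (fun m => x m <> 0) q H))
  | right _ => 0%nat
  end.

Lemma last_supp_below_spec x q : (exists m, (m < q)%nat /\ x m <> 0) ->
  (last_supp_below x q < q)%nat /\ x (last_supp_below x q) <> 0 /\
  forall j, (last_supp_below x q < j < q)%nat -> x j = 0.
Proof.
  intros H. unfold last_supp_below. destruct excluded_middle_informative; [|tauto].
  destruct constructive_indefinite_description as [m [H1 [H2 H3]]]; simpl.
  split; auto. split; auto. intros j Hj. apply NNPP. apply H3; auto.
Qed.

Definition max_supp (x : seqR) : option nat :=
  match excluded_middle_informative
          (exists m, x m <> 0 /\ forall j, (m < j)%nat -> x j = 0) with
  | left H => Some (proj1_sig (constructive_indefinite_description _ H))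
  | right _ => None
  end.

Lemma max_supp_Some x h : max_supp x = Some h ->
  x h <> 0 /\ forall j, (h < j)%nat -> x j = 0.
Proof.
  unfold max_supp. destruct excluded_middle_informative; [|discriminate].
  intros E. injection E; intros <-. destruct constructive_indefinite_description; simpl; auto.
Qed.

Lemma max_supp_None x : max_supp x = None -> forall m, x m <> 0 ->
  forall N, exists n, (N < n)%nat /\ x n <> 0.
Proof.
  unfold max_supp. destruct excluded_middle_informative as [|Hn]; [discriminate|].
  intros _ m Hm N. apply NNPP. intro H. apply Hn.
  destruct (greatest_below (fun j => x j <> 0) (S (Nat.max m N))) as [h [H1 [H2 H3]]].
  - exists m. split; auto; lia.
  - exists h. split; auto. intros j Hj. apply NNPP. intro Hxj.
    destruct (Nat.le_gt_cases j (Nat.max m N)).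
    + apply (H3 j); auto. lia.
    + apply H. exists j. split; auto. lia.
Qed.

Definition part_start (c : nat -> bool) (i : nat) : nat :=
  match nth_cut c i with Some p => p | None => 0%nat end.

Definition part_interval (x : seqR) (c : nat -> bool) (i : nat) : interval :=
  mkInterval (part_start c i)
    (match nth_cut c (S i) with Some q => Some (last_supp_below x q) | None => max_supp x end).

Definition part_sum (x : seqR) (L : R) (c : nat -> bool) (i : nat) : R :=
  cell_end x L c (part_start c i) - psum x (part_start c i).

Section Partition.
Variables (x : seqR) (L : R) (c : nat -> bool).
Hypothesis HL : is_lim_seq (psum x) L.
Hypothesis Hsupp : forall m, c m = true -> x m <> 0.

Lemma part_interval_next i p q : nth_cut c i = Some p -> nth_cut c (S i) = Some q ->
  lo (part_interval x c i) = p /\ hi (part_interval x c i) = Some (last_supp_below x q) /\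
  (p <= last_supp_below x q < q)%nat /\ x (last_supp_below x q) <> 0 /\
  next_cut c p = Some q /\ forall j, (last_supp_below x q < j < q)%nat -> x j = 0.
Proof.
  intros Hp Hq. pose proof (Hsupp p (nth_cut_cut c i p Hp)) as Hxp.
  assert (Hnext : next_cut c p = Some q) by (simpl in Hq; rewrite Hp in Hq; auto).
  assert (Hpq : (p < q)%nat) by (apply next_cut_Some in Hnext; lia).
  destruct (last_supp_below_spec x q (ex_intro _ p (conj Hpq Hxp))) as [L1 [L2 L3]].
  unfold part_interval, part_start. cbn [lo hi]. rewrite Hp, Hq.
  repeat split; auto.
  destruct (Nat.le_gt_cases p (last_supp_below x q)); auto.
  exfalso. apply Hxp, L3. lia.
Qed.

Lemma part_interval_last i p : nth_cut c i = Some p -> nth_cut c (S i) = None ->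
  lo (part_interval x c i) = p /\ hi (part_interval x c i) = max_supp x /\
  next_cut c p = None /\ wf_interval (part_interval x c i) /\
  sup_matches_supp x (part_interval x c i).
Proof.
  intros Hp Hq. pose proof (Hsupp p (nth_cut_cut c i p Hp)) as Hxp.
  assert (Hnext : next_cut c p = None) by (simpl in Hq; rewrite Hp in Hq; auto).
  unfold wf_interval, sup_matches_supp, part_interval, part_start. cbn [lo hi].
  rewrite Hp, Hq.
  repeat split; auto.
  - destruct (max_supp x) as [h|] eqn:Eh; auto. apply max_supp_Some in Eh.
    destruct (Nat.le_gt_cases p h) as [|Hhp]; auto. exfalso. apply Hxp, Eh, Hhp.
  - destruct (max_supp x) as [h|] eqn:Eh.
    + apply max_supp_Some; auto.
    + intros N. apply (max_supp_None x Eh p Hxp N).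
Qed.

Lemma part_interval_wf i p : nth_cut c i = Some p -> wf_interval (part_interval x c i).
Proof.
  intros Hp. destruct (nth_cut c (S i)) as [q|] eqn:Hq.
  - destruct (part_interval_next i p q Hp Hq) as [E1 [E2 [E3 _]]].
    unfold wf_interval. rewrite E1, E2. lia.
  - apply (part_interval_last i p Hp Hq).
Qed.

Lemma part_interval_sum i p : nth_cut c i = Some p ->
  interval_sum x (part_interval x c i) (part_sum x L c i).
Proof.
  intros Hp. apply (interval_sum_iff x L _ _ HL (part_interval_wf i p Hp)).
  unfold part_sum, interval_end.
  replace (lo (part_interval x c i)) with (part_start c i) by reflexivity.
  unfold part_start. rewrite Hp. f_equal. unfold cell_end.
  destruct (nth_cut c (S i)) as [q|] eqn:Hq.
  - destruct (part_interval_next i p q Hp Hq) as [_ [E2 [E3 [_ [E5 E6]]]]].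
    rewrite E2, E5. apply psum_const; [lia|]. intros j Hj. apply E6. lia.
  - destruct (part_interval_last i p Hp Hq) as [_ [E2 [E3 _]]]. rewrite E2, E3.
    destruct (max_supp x) as [h|] eqn:Eh; auto.
    apply (lim_psum_eventually_const x L (S h) HL). intros j Hj.
    apply (max_supp_Some x h Eh). lia.
Qed.

Lemma part_sum_sq i p : nth_cut c i = Some p -> (part_sum x L c i)^2 = cell_sq x L c p.
Proof.
  intros Hp. unfold part_sum, part_start, cell_sq. rewrite Hp.
  now rewrite is_start_cut by (apply (nth_cut_cut c i p Hp)).
Qed.

Lemma part_interval_ordered i : nth_cut c (S i) <> None ->
  match hi (part_interval x c i) with
  | Some h => (h < lo (part_interval x c (S i)))%nat
  | None => False
  end.
Proof.
  intros Hq. destruct (nth_cut c (S i)) as [q|] eqn:Eq; [|congruence].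
  destruct (nth_cut c i) as [p|] eqn:Ep; [|simpl in Eq; rewrite Ep in Eq; discriminate].
  destruct (part_interval_next i p q Ep Eq) as [_ [E2 [E3 _]]]. rewrite E2.
  change (lo (part_interval x c (S i))) with (part_start c (S i)).
  unfold part_start. rewrite Eq. lia.
Qed.

Lemma part_interval_inner_supp i : nth_cut c (S i) <> None ->
  in_supp x (lo (part_interval x c i)) /\
  exists h, hi (part_interval x c i) = Some h /\ in_supp x h.
Proof.
  intros Hq. destruct (nth_cut c (S i)) as [q|] eqn:Eq; [|congruence].
  destruct (nth_cut c i) as [p|] eqn:Ep; [|simpl in Eq; rewrite Ep in Eq; discriminate].
  destruct (part_interval_next i p q Ep Eq) as [E1 [E2 [_ [E4 _]]]].
  unfold in_supp. rewrite E1. split; [apply Hsupp, (nth_cut_cut c i p Ep)|eauto].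
Qed.

End Partition.

Section NormingPartition.
Variables (x : seqR) (J L : R) (c : nat -> bool).
Hypothesis HJ : Jnorm x = Finite J.
Hypothesis HL : is_lim_seq (psum x) L.
Hypothesis Hsupp : forall m, c m = true -> x m <> 0.
Hypothesis Hfirst : forall m, x m <> 0 -> (forall j, (j < m)%nat -> x j = 0) -> c m = true.
Hypothesis Hcut : exists m, c m = true.
Hypothesis Hnorm : forall eta, 0 < eta -> exists M, J^2 - eta < cut_value x L c M.

Lemma nth_cut_0_defined : nth_cut c 0 <> None.
Proof.
  destruct Hcut as [m Hm]. destruct (nth_cut_complete c m Hm) as [j Hj]. intros E.
  rewrite (nth_cut_None_mono c 0 j E) in Hj; [discriminate|lia].
Qed.

Lemma supp_before_nth_cut_0 p : nth_cut c 0 = Some p -> forall j, (j < p)%nat -> x j = 0.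
Proof.
  intros Hp j Hj. apply NNPP. intro Hxj.
  destruct (least_above (fun m => x m <> 0) 0 (ex_intro _ j (conj (Nat.le_0_l j) Hxj)))
    as [m [_ [Hm1 Hm2]]].
  assert (Hcm : c m = true) by (apply Hfirst; auto; intros k Hk; apply NNPP, Hm2; lia).
  assert (m <= j)%nat by (destruct (Nat.le_gt_cases m j); auto; exfalso; apply (Hm2 j); auto; lia).
  rewrite (nth_cut_0_first c p Hp m) in Hcm; [discriminate|lia].
Qed.

Lemma cell_sq_not_cut m : c m = false -> cell_sq x L c m = 0.
Proof.
  intros Hm. unfold cell_sq. destruct (Nat.eq_dec m 0) as [->|Hm0].
  - destruct (nth_cut c 0) as [p|] eqn:Hp; [|exfalso; apply nth_cut_0_defined; auto].
    pose proof Hp as Hnext. simpl in Hnext. rewrite Hm in Hnext.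
    unfold cell_end. rewrite Hnext, (psum_const x 0 p); [simpl; ring|lia|].
    intros j Hj. apply (supp_before_nth_cut_0 p); auto. lia.
  - rewrite is_start_pos, Hm by lia. reflexivity.
Qed.

Lemma cut_value_le_part_sums M K :
  (forall m, (m < M)%nat -> c m = true -> exists i, (i < K)%nat /\ nth_cut c i = Some m) ->
  cut_value x L c M <= sum_lt (fun i => (part_sum x L c i)^2) K.
Proof.
  intros Hidx.
  assert (Hch : forall m, exists i, (m < M)%nat -> c m = true ->
                (i < K)%nat /\ nth_cut c i = Some m).
  { intros m. destruct (classic ((m < M)%nat /\ c m = true)) as [[H1 H2]|H].
    - destruct (Hidx m H1 H2) as [i Hi]. exists i. auto.
    - exists 0%nat. intros H1 H2. tauto. }
  destruct (choice _ Hch) as [idx Hidx'].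
  unfold cut_value.
  rewrite (sum_lt_ext _ (fun m => if c m then (part_sum x L c (idx m))^2 else 0)).
  - apply (sum_lt_reindex_le (fun i => (part_sum x L c i)^2) c idx);
      [intros; apply pow2_ge_0| |].
    + intros i j Hi Hj Ci Cj E. destruct (Hidx' i Hi Ci) as [_ Ei].
      destruct (Hidx' j Hj Cj) as [_ Ej]. rewrite E in Ei. congruence.
    + intros i Hi Ci. apply (Hidx' i Hi Ci).
  - intros m Hm. destruct (c m) eqn:Cm.
    + destruct (Hidx' m Hm Cm) as [_ E]. symmetry. apply (part_sum_sq x L c _ m E).
    + apply cell_sq_not_cut; auto.
Qed.

Lemma part_sums_le K : (forall i, (i < K)%nat -> nth_cut c i <> None) ->
  sum_lt (fun i => (part_sum x L c i)^2) K <= J^2.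
Proof.
  intros HK.
  assert (Hwf : forall i, (i < K)%nat -> wf_interval (part_interval x c i)).
  { intros i Hi. destruct (nth_cut c i) as [p|] eqn:Hp; [|exfalso; apply (HK i); auto].
    apply (part_interval_wf x c Hsupp i p Hp). }
  apply (sum_sq_family_le x J HJ K (part_interval x c)); auto.
  - apply ordered_family_disjoint; auto.
    intros i Hi. apply (part_interval_ordered x c Hsupp). apply HK; auto.
  - intros i Hi. destruct (nth_cut c i) as [p|] eqn:Hp; [|exfalso; apply (HK i); auto].
    apply (part_interval_sum x L c HL Hsupp i p Hp).
Qed.

Lemma cuts_below_indexed M : exists K0, forall m, (m < M)%nat -> c m = true ->
  exists i, (i < K0)%nat /\ nth_cut c i = Some m.
Proof.
  induction M as [|M [K0 HK0]]; [exists 0%nat; intros; lia|].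
  destruct (c M) eqn:CM.
  - destruct (nth_cut_complete c M CM) as [i Hi]. exists (Nat.max K0 (S i)).
    intros m Hm Cm. destruct (Nat.eq_dec m M) as [->|Hne]; [exists i; split; auto; lia|].
    destruct (HK0 m ltac:(lia) Cm) as [j [Hj Ej]]. exists j. split; auto. lia.
  - exists K0. intros m Hm Cm. destruct (Nat.eq_dec m M) as [->|Hne]; [congruence|].
    apply HK0; auto. lia.
Qed.

Lemma part_family_wf F : fint F = part_interval x c ->
  (forall i, in_F F i <-> nth_cut c i <> None) ->
  match fsize F with Some k => (1 <= k)%nat | None => True end -> wf_family F.
Proof.
  intros Hint HF Hsize. split; [auto|split]; rewrite Hint.
  - intros i Hi. apply HF in Hi. destruct (nth_cut c i) as [p|] eqn:Hp; [|congruence].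
    apply (part_interval_wf x c Hsupp i p Hp).
  - intros i Hi. apply (part_interval_ordered x c Hsupp). apply HF; auto.
Qed.

Lemma norming_partition_finite K : (1 <= K)%nat -> nth_cut c K = None ->
  (forall i, (i < K)%nat -> nth_cut c i <> None) ->
  norming_partition x (mkFamily (Some K) (part_interval x c)).
Proof.
  intros HK1 HKN HKd.
  assert (HF : forall i, (i < K)%nat <-> nth_cut c i <> None).
  { intros i. split; auto. intros Hi. destruct (Nat.le_gt_cases K i); auto.
    exfalso. apply Hi, (nth_cut_None_mono c K i HKN H). }
  assert (Hsum : sum_lt (fun i => (part_sum x L c i)^2) K = J^2).
  { apply Rle_antisym; [apply part_sums_le; auto|].
    apply Rnot_lt_le. intro Hlt.
    destruct (Hnorm (J^2 - sum_lt (fun i => (part_sum x L c i)^2) K)) as [M HM]; [lra|].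
    assert (cut_value x L c M <= sum_lt (fun i => (part_sum x L c i)^2) K); [|lra].
    apply cut_value_le_part_sums. intros m _ Cm.
    destruct (nth_cut_complete c m Cm) as [i Hi]. exists i. split; auto.
    apply HF. congruence. }
  split; [split|].
  - apply part_family_wf; auto.
  - exists (part_sum x L c). split.
    + intros i Hi. destruct (nth_cut c i) as [p|] eqn:Hp; [|exfalso; apply (HKd i); auto].
      apply (part_interval_sum x L c HL Hsupp i p Hp).
    + cbn [fsize]. rewrite Hsum, HJ, sqrt_pow2; auto. apply (Jnorm_nonneg x J HJ).
  - cbn [fsize fint]. split; [|split].
    + intros i Hi. apply part_interval_inner_supp; auto.
    + destruct (nth_cut c (pred K)) as [p|] eqn:Hp; [|exfalso; apply (HKd (pred K)); auto; lia].
      replace K with (S (pred K)) in HKN by lia.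
      destruct (part_interval_last x c Hsupp (pred K) p Hp HKN) as [E1 _].
      unfold in_supp. rewrite E1. apply Hsupp, (nth_cut_cut c _ p Hp).
    + destruct (nth_cut c (pred K)) as [p|] eqn:Hp; [|exfalso; apply (HKd (pred K)); auto; lia].
      replace K with (S (pred K)) in HKN by lia.
      apply (part_interval_last x c Hsupp (pred K) p Hp HKN).
Qed.

Lemma norming_partition_infinite : (forall i, nth_cut c i <> None) ->
  norming_partition x (mkFamily None (part_interval x c)).
Proof.
  intros Hall.
  assert (Hser : is_series (fun i => (part_sum x L c i)^2) (J^2)).
  { change (is_lim_seq (sum_n (fun i => (part_sum x L c i)^2)) (J^2)).
    apply is_lim_seq_spec. intros eps.
    destruct (Hnorm eps (cond_pos eps)) as [M HM].
    destruct (cuts_below_indexed M) as [K0 HK0].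
    exists K0. intros n Hn. rewrite sum_n_psum. unfold psum.
    pose proof (cut_value_le_part_sums M K0 HK0).
    assert (sum_lt (fun i => (part_sum x L c i)^2) K0 <=
            sum_lt (fun i => (part_sum x L c i)^2) (S n))
      by (apply sum_lt_mono; [intros; apply pow2_ge_0|lia]).
    assert (sum_lt (fun i => (part_sum x L c i)^2) (S n) <= J^2)
      by (apply part_sums_le; auto).
    apply Rabs_def1; lra. }
  split; [split|].
  - apply part_family_wf; cbn; auto. split; auto.
  - exists (part_sum x L c). split.
    + intros i _. destruct (nth_cut c i) as [p|] eqn:Hp; [|exfalso; apply (Hall i); auto].
      apply (part_interval_sum x L c HL Hsupp i p Hp).
    + exists (J^2). split; auto. rewrite HJ, sqrt_pow2; auto. apply (Jnorm_nonneg x J HJ).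
  - intros i. apply part_interval_inner_supp; auto.
Qed.

Lemma norming_cuts_partition : exists F, norming_partition x F /\
  fint F = part_interval x c /\ forall i, nth_cut c i <> None -> in_F F i.
Proof.
  destruct (classic (exists K, nth_cut c K = None)) as [[K0 HK0]|Hall].
  - destruct (least_above (fun K => nth_cut c K = None) 0
                (ex_intro _ K0 (conj (Nat.le_0_l K0) HK0))) as [K [_ [HK1 HK2]]].
    assert (HKd : forall i, (i < K)%nat -> nth_cut c i <> None) by (intros; apply HK2; lia).
    assert (1 <= K)%nat by (destruct K; [exfalso; apply nth_cut_0_defined; auto|lia]).
    exists (mkFamily (Some K) (part_interval x c)).
    split; [apply norming_partition_finite; auto|split; auto].
    intros i Hi. unfold in_F. cbn. destruct (Nat.le_gt_cases K i) as [Hle|]; auto.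
    exfalso. apply Hi, (nth_cut_None_mono c K i HK1 Hle).
  - exists (mkFamily None (part_interval x c)).
    split; [apply norming_partition_infinite|split; auto].
    + intros i E. apply Hall. eauto.
    + intros i _. exact I.
Qed.

Lemma part_intervals_separate n1 n2 : consecutive_in_supp x n1 n2 -> c n2 = true ->
  exists i, nth_cut c i <> None /\ nth_cut c (S i) <> None /\
    in_interval n1 (part_interval x c i) /\ in_interval n2 (part_interval x c (S i)).
Proof.
  intros [Hn [Hx1 [Hx2 Hz]]] Hc2. unfold in_supp in *.
  destruct (nth_cut_complete c n2 Hc2) as [[|i] Hj].
  { exfalso. apply Hx1, (supp_before_nth_cut_0 n2 Hj). auto. }
  destruct (nth_cut c i) as [p|] eqn:Hp; [|simpl in Hj; rewrite Hp in Hj; discriminate].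
  destruct (part_interval_next x c Hsupp i p n2 Hp Hj) as [E1 [E2 [E3 [E4 [_ E6]]]]].
  assert (Hl : last_supp_below x n2 = n1).
  { destruct (Nat.lt_total (last_supp_below x n2) n1) as [H|[H|H]]; auto; exfalso.
    - apply Hx1, E6. lia.
    - apply E4, Hz. lia. }
  exists i. repeat split; try congruence.
  - rewrite E1. rewrite Hl in E3. lia.
  - rewrite E2, Hl. lia.
  - change (lo (part_interval x c (S i))) with (part_start c (S i)).
    unfold part_start. rewrite Hj. lia.
  - pose proof (part_interval_wf x c Hsupp (S i) n2 Hj) as Hw. unfold wf_interval in Hw.
    change (lo (part_interval x c (S i))) with (part_start c (S i)) in Hw.
    unfold part_start in Hw. rewrite Hj in Hw. destruct (hi (part_interval x c (S i))); auto.
Qed.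

End NormingPartition.

Lemma extreme_point_norming_cuts (x : seqR) (J L : R) (n1 n2 : nat) :
  Jnorm x = Finite J -> J <= 1 -> is_lim_seq (psum x) L -> extreme_point_BJ x ->
  consecutive_in_supp x n1 n2 ->
  exists c : nat -> bool,
    (forall m, c m = true -> x m <> 0) /\ c n2 = true /\
    (forall m, x m <> 0 -> (forall j, (j < m)%nat -> x j = 0) -> c m = true) /\
    (forall eta, 0 < eta -> exists M, J^2 - eta < cut_value x L c M).
Proof.
  intros HJ HJ1 HL Hext Hcons. pose proof Hcons as [Hn [Hx1 [Hx2 Hz]]].
  destruct (separating_norming_cut_set x J L n1 n2 HJ HL
              (extreme_point_separating_cuts x J L n1 n2 HJ HJ1 HL Hext Hn))
    as [g [[m [Hm1 Hm2]] Hg]].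
  exists (support_cuts x g). split; [|split; [|split]].
  - apply support_cuts_supp.
  - apply (support_cuts_intro x g n2 m); auto; [lia|apply is_start_cut; auto|].
    intros j Hj. apply Hz. lia.
  - intros k Hk Hb. apply (support_cuts_intro x g k 0); auto; [lia|intros; apply Hb; lia].
  - intros eta Heta. destruct (Hg eta Heta) as [M HM].
    destruct (cut_value_support_cuts_ge x L g HL M) as [M' HM']. exists M'. lra.
Qed.

Lemma BJ_Jnorm_finite (x : seqR) : BJ x -> exists J, Jnorm x = Finite J /\ J <= 1.
Proof.
  unfold BJ. intros HB.
  assert (H0 : Rbar_le (Finite 0) (Jnorm x))
    by (apply (proj1 (Lub_Rbar_correct (Jvalues x))), Jvalues_zero).
  destruct (Jnorm x) as [J| |]; simpl in HB, H0; try contradiction. eauto.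
Qed.

Theorem proposition3p14 (x : seqR) :
  extreme_point_BJ x ->
  separated_by_partitions x /\
  (forall n1 n2, consecutive_in_supp x n1 n2 -> x n1 * x n2 < 0).
Proof.
  intros Hext. destruct (BJ_Jnorm_finite x (proj1 Hext)) as [J [HJ HJ1]].
  destruct (Jnorm_finite_psum_cvg x J HJ) as [L HL].
  split.
  - split; [unfold inJ; rewrite HJ; reflexivity|].
    intros n1 n2 Hcons.
    destruct (extreme_point_norming_cuts x J L n1 n2 HJ HJ1 HL Hext Hcons)
      as [c [Hsupp [Hc2 [Hfirst Hnorm]]]].
    destruct (norming_cuts_partition x J L c HJ HL Hsupp Hfirst (ex_intro _ n2 Hc2) Hnorm)
      as [F [HF [Hint HinF]]].
    destruct (part_intervals_separate x c Hsupp Hfirst n1 n2 Hcons Hc2)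
      as [i [Hi [HSi [Hn1 Hn2]]]].
    exists F. split; auto. exists i, (S i). rewrite Hint. auto 6.
  - intros n1 n2 Hcons.
    destruct (extreme_point_norming_cuts x J L n1 n2 HJ HJ1 HL Hext Hcons)
      as [c [Hsupp [Hc2 [_ Hnorm]]]].
    apply (norming_consecutive_sign x J L c HJ HL Hnorm n1 n2 Hcons Hsupp Hc2).
Qed.
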